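(* For every $\varepsilon>0$ there exists $n_0$ such that for all $n\ge n_0$, $$\frac{\sqrt[3]{6\ln 2}-\varepsilon}{n^{4/3}}\le p_1^*(n)\le\frac{\sqrt[3]{6\ln 2}+\varepsilon}{n^{4/3}}.$$
   Context: $G(n,p)$ is the Erdős–Rényi random graph on $n$ labelled vertices in which each of the $\binom n2$ possible edges is present independently with probability $p$; $\mathbb{P}_{n,p}$ is the corresponding probability. A distance graph in $\mathbb{R}^d$ is a finite graph $(V,E)$ with $V\subset\mathbb{R}^d$ finite and $E\subseteq\{\{\mathbf{x},\mathbf{y}\}\subseteq V: |\mathbf{x}-\mathbf{y}|=1\}$ (Euclidean norm). A graph is realizable in $\mathbb{R}^d$ as a distance graph if it is isomorphic to some distance graph in $\mathbb{R}^d$. For $d\ge1$, $p_d^*(n)=\sup\{p\in[0,1]:\ \mathbb{P}_{n,p}(G \text{ is realizable in } \mathbb{R}^d \text{ as a distance graph})>\tfrac12\}$. *)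

From Stdlib Require Import Reals List Arith ClassicalEpsilon.
Import ListNotations.
Open Scope R_scope.

(* Vertices of G(n,p) are 0,...,n-1.  The potential edges are the pairs
   (i,j) with i < j < n; there are binom(n,2) of them. *)
Definition pairs (n : nat) : list (nat * nat) :=
  flat_map (fun j => map (fun i => (i, j)) (seq 0 j)) (seq 0 n).

Fixpoint sublists {A : Type} (l : list A) : list (list A) :=
  match l with
  | [] => [[]]
  | x :: l' => let r := sublists l' in r ++ map (cons x) r
  end.

(* The graph on vertex set {0,..,n-1} with edge set S is realizable in R^d
   as a distance graph: there is an injective placement of the vertices in
   R^d (here d = 1, so R with the Euclidean norm |.|) such that every edge
   joins two points at distance exactly 1. *)
Definition realizable_R1 (n : nat) (S : list (nat * nat)) : Prop :=
  exists f : nat -> R,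
    (forall i j : nat, (i < n)%nat -> (j < n)%nat -> f i = f j -> i = j) /\
    (forall e, In e S -> Rabs (f (fst e) - f (snd e)) = 1).

(* P_{n,p}(G realizable in R^1): sum over all edge sets S of the weight
   p^|S| (1-p)^(binom(n,2) - |S|) of those S that are realizable. *)
Definition prob_realizable (n : nat) (p : R) : R :=
  let E := pairs n in
  fold_right Rplus 0
    (map (fun S =>
            if excluded_middle_informative (realizable_R1 n S)
            then p ^ length S * (1 - p) ^ (length E - length S)
            else 0)
         (sublists E)).

(* The set whose supremum is p_1^*(n). *)
Definition pstar_set (n : nat) (p : R) : Prop :=
  0 <= p <= 1 /\ prob_realizable n p > 1 / 2.

(* A distance graph on the line has no claw K_{1,3}, since a point of the line has
   only two points at distance 1.  Conversely a graph without claws, triangles,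
   4-cycles and paths on five vertices is a disjoint union of paths with at most
   four vertices, and embeds in the line.  For p of order n^(-4/3) the expected
   number of triangles, 4-cycles and 5-vertex paths tends to 0, while the number
   of claws has mean lambda ~ n^4 p^3 / 6 and is asymptotically Poisson: Harris'
   inequality gives P(realizable) >= e^(-lambda - o(1)), and Janson's inequality
   gives P(realizable) <= P(no claw) <= e^(-lambda + o(1)).  So P(realizable)
   crosses 1/2 where lambda = ln 2, that is at p = (6 ln 2)^(1/3) n^(-4/3). *)

From Stdlib Require Import Reals Lra Lia Psatz List Arith ClassicalEpsilon Classical ZArith Sorted.
Import ListNotations.
Open Scope R_scope.

(** * Random edge sets *)

(* [prob p l A] is the probability that the random sublist of [l] obtained by
   keeping each element independently with probability [p] satisfies [A]. *)
Fixpoint prob {E : Type} (p : R) (l : list E) (A : list E -> Prop) : R :=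
  match l with
  | [] => if excluded_middle_informative (A []) then 1 else 0
  | x :: l' => (1 - p) * prob p l' A + p * prob p l' (fun S => A (x :: S))
  end.

Lemma incl_cons_cons {E} (x : E) S l : incl S l -> incl (x :: S) (x :: l).
Proof. intros H z [<-|Hz]; [left; auto | right; auto]. Qed.

Lemma prob_ext_in {E} p (l : list E) A B :
  (forall S, incl S l -> (A S <-> B S)) -> prob p l A = prob p l B.
Proof.
  induction l as [|x l IH] in A, B |- *; intros H; simpl.
  - assert (A [] <-> B []) as HAB by (apply H; intros z []).
    destruct (excluded_middle_informative (A [])), (excluded_middle_informative (B []));
      tauto || reflexivity.
  - rewrite (IH A B), (IH (fun S => A (x :: S)) (fun S => B (x :: S))); auto.
    + intros S HS; apply H, incl_cons_cons, HS.
    + intros S HS; apply H, incl_tl, HS.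
Qed.

Lemma prob_ext {E} p (l : list E) A B : (forall S, A S <-> B S) -> prob p l A = prob p l B.
Proof. intros H; apply prob_ext_in; auto. Qed.

Lemma prob_eq0 {E} p (l : list E) A : (forall S, incl S l -> ~ A S) -> prob p l A = 0.
Proof.
  induction l as [|x l IH] in A |- *; intros H; simpl.
  - destruct (excluded_middle_informative (A [])) as [a|]; auto.
    exfalso; apply (H []); auto; intros z [].
  - rewrite (IH A), (IH (fun S => A (x :: S))); [ring | |].
    + intros S HS; apply H, incl_cons_cons, HS.
    + intros S HS; apply H, incl_tl, HS.
Qed.

Lemma prob_eq1 {E} p (l : list E) A : (forall S, A S) -> prob p l A = 1.
Proof.
  induction l as [|x l IH] in A |- *; intros H; simpl.
  - destruct (excluded_middle_informative (A [])) as [|n]; [reflexivity | contradiction (n (H []))].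
  - rewrite (IH A), (IH (fun S => A (x :: S))); auto; ring.
Qed.

Lemma prob_zero {E} (l : list E) A : prob 0 l A = if excluded_middle_informative (A []) then 1 else 0.
Proof. induction l as [|x l IH] in A |- *; simpl; auto. rewrite IH. ring. Qed.

Lemma prob_bounds {E} p (l : list E) A : 0 <= p <= 1 -> 0 <= prob p l A <= 1.
Proof.
  intros Hp. induction l as [|x l IH] in A |- *; simpl.
  - destruct (excluded_middle_informative (A [])); lra.
  - destruct (IH A), (IH (fun S => A (x :: S))). nra.
Qed.

Lemma prob_split {E} p (l : list E) A B :
  prob p l A = prob p l (fun S => A S /\ B S) + prob p l (fun S => A S /\ ~ B S).
Proof.
  induction l as [|x l IH] in A, B |- *; simpl.
  - destruct (excluded_middle_informative (A [])),
      (excluded_middle_informative (A [] /\ B [])),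
      (excluded_middle_informative (A [] /\ ~ B [])); tauto || lra.
  - rewrite (IH A B), (IH (fun S => A (x :: S)) (fun S => B (x :: S))). ring.
Qed.

Lemma prob_compl {E} p (l : list E) A : prob p l A + prob p l (fun S => ~ A S) = 1.
Proof.
  rewrite <- (prob_eq1 p l (fun _ => True)) by auto.
  rewrite (prob_split p l (fun _ => True) A).
  f_equal; apply prob_ext; tauto.
Qed.

Lemma prob_le {E} p (l : list E) A B : 0 <= p <= 1 ->
  (forall S, A S -> B S) -> prob p l A <= prob p l B.
Proof.
  intros Hp H. rewrite (prob_split p l B A), (prob_ext p l (fun S => B S /\ A S) A) by firstorder.
  pose proof (prob_bounds p l (fun S => B S /\ ~ A S) Hp). lra.
Qed.

Lemma prob_le_in {E} p (l : list E) A B : 0 <= p <= 1 ->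
  (forall S, incl S l -> A S -> B S) -> prob p l A <= prob p l B.
Proof.
  intros Hp H. rewrite (prob_ext_in p l A (fun S => A S /\ incl S l)) by tauto.
  apply prob_le; firstorder.
Qed.

Lemma prob_or_le {E} p (l : list E) A B : 0 <= p <= 1 ->
  prob p l (fun S => A S \/ B S) <= prob p l A + prob p l B.
Proof.
  intros Hp. rewrite (prob_split p l _ A).
  assert (prob p l (fun S => (A S \/ B S) /\ A S) <= prob p l A) by (apply prob_le; tauto).
  assert (prob p l (fun S => (A S \/ B S) /\ ~ A S) <= prob p l B) by (apply prob_le; tauto).
  lra.
Qed.

Lemma prob_const_and {E} p (l : list E) (P : Prop) A :
  prob p l (fun S => P /\ A S) = if excluded_middle_informative P then prob p l A else 0.
Proof.
  destruct (excluded_middle_informative P).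
  - apply prob_ext; tauto.
  - apply prob_eq0; tauto.
Qed.

Definition down_closed {E} (A : list E -> Prop) := forall S T, incl S T -> A T -> A S.
Definition up_closed {E} (A : list E -> Prop) := forall S T, incl S T -> A S -> A T.

Lemma down_closed_cons {E} (A : list E -> Prop) x : down_closed A -> down_closed (fun S => A (x :: S)).
Proof. intros H S T HST; apply H, incl_cons_cons, HST. Qed.

Lemma down_closed_not {E} (A : list E -> Prop) : up_closed A -> down_closed (fun S => ~ A S).
Proof. intros H S T HST HT HS; apply HT; eapply H; eauto. Qed.

Lemma prob_cons_le {E} p (l : list E) A x : 0 <= p <= 1 -> down_closed A ->
  prob p l (fun S => A (x :: S)) <= prob p l A.
Proof. intros Hp H; apply prob_le; auto; intros S; apply H, incl_tl, incl_refl. Qed.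

Lemma harris {E} p (l : list E) A B : 0 <= p <= 1 -> down_closed A -> down_closed B ->
  prob p l A * prob p l B <= prob p l (fun S => A S /\ B S).
Proof.
  intros Hp. induction l as [|x l IH] in A, B |- *; intros HA HB; simpl.
  - destruct (excluded_middle_informative (A [])), (excluded_middle_informative (B [])),
      (excluded_middle_informative (A [] /\ B [])); tauto || lra.
  - pose proof (IH A B HA HB).
    pose proof (IH _ _ (down_closed_cons A x HA) (down_closed_cons B x HB)).
    pose proof (prob_cons_le p l A x Hp HA). pose proof (prob_cons_le p l B x Hp HB).
    pose proof (prob_bounds p l A Hp). pose proof (prob_bounds p l B Hp).
    pose proof (prob_bounds p l (fun S => A (x :: S)) Hp).
    pose proof (prob_bounds p l (fun S => B (x :: S)) Hp).
    (* conditioning on [x] leaves the gap [p (1 - p) (a0 - a1) (b0 - b1)], both differences being >= 0 *)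
    set (a0 := prob p l A) in *. set (b0 := prob p l B) in *.
    set (a1 := prob p l (fun S => A (x :: S))) in *. set (b1 := prob p l (fun S => B (x :: S))) in *.
    assert (0 <= p * (1 - p) * ((a0 - a1) * (b0 - b1))) by (apply Rmult_le_pos; nra).
    nra.
Qed.

Lemma harris_up_down {E} p (l : list E) A B : 0 <= p <= 1 -> up_closed A -> down_closed B ->
  prob p l (fun S => A S /\ B S) <= prob p l A * prob p l B.
Proof.
  intros Hp HA HB.
  pose proof (harris p l _ _ Hp (down_closed_not A HA) HB) as H; cbv beta in H.
  pose proof (prob_compl p l A).
  pose proof (prob_split p l B A) as Hs.
  rewrite (prob_ext p l (fun S => B S /\ A S) (fun S => A S /\ B S)) in Hs by tauto.
  rewrite (prob_ext p l (fun S => ~ A S /\ B S) (fun S => B S /\ ~ A S)) in H by tauto.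
  replace (prob p l (fun S => ~ A S)) with (1 - prob p l A) in H by lra.
  rewrite Hs in *. nra.
Qed.

Lemma prob_down_closed_antimono {E} (l : list E) A p q : 0 <= p -> p <= q -> q <= 1 ->
  down_closed A -> prob q l A <= prob p l A.
Proof.
  intros Hp Hpq Hq. induction l as [|x l IH] in A |- *; intros HA; simpl; [lra|].
  pose proof (IH A HA). pose proof (IH _ (down_closed_cons A x HA)).
  pose proof (prob_cons_le p l A x ltac:(lra) HA).
  pose proof (prob_bounds q l A ltac:(lra)). pose proof (prob_bounds q l (fun S => A (x :: S)) ltac:(lra)).
  nra.
Qed.

Definition depends_only_on {E} (P : E -> Prop) (A : list E -> Prop) :=
  forall S T, (forall e, P e -> (In e S <-> In e T)) -> (A S <-> A T).

Lemma depends_only_on_cons {E} P (A : list E -> Prop) x :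
  depends_only_on P A -> depends_only_on P (fun S => A (x :: S)).
Proof. intros H S T HST; apply H; intros e He; specialize (HST e He); simpl; tauto. Qed.

Lemma depends_only_on_irrelevant {E} P (A : list E -> Prop) x :
  depends_only_on P A -> ~ P x -> forall S, A (x :: S) <-> A S.
Proof. intros H Hx S; apply H; intros e He; simpl; split; [intros [->|]|]; tauto. Qed.

Lemma prob_indep {E} p (l : list E) P A B :
  depends_only_on P A -> depends_only_on (fun e => ~ P e) B ->
  prob p l (fun S => A S /\ B S) = prob p l A * prob p l B.
Proof.
  induction l as [|x l IH] in A, B |- *; intros HA HB; simpl.
  - destruct (excluded_middle_informative (A [])), (excluded_middle_informative (B [])),
      (excluded_middle_informative (A [] /\ B [])); tauto || lra.
  - rewrite IH, (IH (fun S => A (x :: S)) (fun S => B (x :: S))) by (auto; apply depends_only_on_cons; auto).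
    destruct (classic (P x)) as [Px|Px].
    + rewrite (prob_ext p l (fun S => B (x :: S)) B); [ring|].
      apply (depends_only_on_irrelevant (fun e => ~ P e)); auto.
    + rewrite (prob_ext p l (fun S => A (x :: S)) A); [ring|].
      apply (depends_only_on_irrelevant P); auto.
Qed.

Fixpoint rsum {A} (f : A -> R) (L : list A) : R :=
  match L with [] => 0 | a :: L' => f a + rsum f L' end.
Fixpoint rprod {A} (f : A -> R) (L : list A) : R :=
  match L with [] => 1 | a :: L' => f a * rprod f L' end.

Lemma rsum_app {A} f (L1 L2 : list A) : rsum f (L1 ++ L2) = rsum f L1 + rsum f L2.
Proof. induction L1; simpl; [ring | rewrite IHL1; ring]. Qed.

Lemma rsum_le {A} f g (L : list A) : (forall a, In a L -> f a <= g a) -> rsum f L <= rsum g L.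
Proof.
  induction L as [|a L IH]; simpl; intros H; [lra|].
  pose proof (H a (or_introl eq_refl)). pose proof (IH (fun b Hb => H b (or_intror Hb))). lra.
Qed.

Lemma rsum_nonneg {A} f (L : list A) : (forall a, In a L -> 0 <= f a) -> 0 <= rsum f L.
Proof.
  induction L as [|a L IH]; simpl; intros H; [lra|].
  pose proof (H a (or_introl eq_refl)). pose proof (IH (fun b Hb => H b (or_intror Hb))). lra.
Qed.

Lemma rsum_const {A} c (L : list A) : rsum (fun _ => c) L = INR (length L) * c.
Proof. induction L; simpl length; [simpl; ring|]. rewrite S_INR; simpl; rewrite IHL; ring. Qed.

Lemma rsum_plus {A} f g (L : list A) : rsum (fun a => f a + g a) L = rsum f L + rsum g L.
Proof. induction L; simpl; [ring | rewrite IHL; ring]. Qed.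

Lemma rsum_scal {A} c f (L : list A) : rsum (fun a => c * f a) L = c * rsum f L.
Proof. induction L; simpl; [ring | rewrite IHL; ring]. Qed.

Lemma rsum_ext {A} f g (L : list A) : (forall a, In a L -> f a = g a) -> rsum f L = rsum g L.
Proof. induction L; simpl; intros H; [auto|]. rewrite H, IHL; auto. Qed.

Lemma rsum_map {A B} (f : B -> R) (g : A -> B) L : rsum f (map g L) = rsum (fun a => f (g a)) L.
Proof. induction L; simpl; [auto | rewrite IHL; auto]. Qed.

Lemma rsum_flat_map {A B} (f : B -> R) (g : A -> list B) L :
  rsum f (flat_map g L) = rsum (fun a => rsum f (g a)) L.
Proof. induction L; simpl; [auto | rewrite rsum_app, IHL; auto]. Qed.

Lemma rsum_incl {A} f (L1 L2 : list A) : NoDup L1 -> incl L1 L2 ->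
  (forall a, In a L2 -> 0 <= f a) -> rsum f L1 <= rsum f L2.
Proof.
  induction L1 as [|x L1 IH] in L2 |- *; intros ND Hi Hf; simpl.
  - apply rsum_nonneg; auto.
  - apply NoDup_cons_iff in ND as [Hx ND].
    destruct (in_split x L2 (Hi x (or_introl eq_refl))) as (P1 & P2 & ->).
    assert (rsum f L1 <= rsum f (P1 ++ P2)).
    { apply IH; auto.
      - intros z Hz. assert (In z (P1 ++ x :: P2)) as Hz' by (apply Hi; right; auto).
        rewrite in_app_iff in *; destruct Hz' as [|[<-|]]; tauto.
      - intros a Ha; apply Hf; rewrite in_app_iff in *; simpl; tauto. }
    rewrite rsum_app in *; simpl. lra.
Qed.

Lemma rprod_const {A} c (L : list A) : rprod (fun _ => c) L = c ^ length L.
Proof. induction L; simpl; auto. rewrite IHL; auto. Qed.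

Lemma sublists_length {A} (l : list A) S : In S (sublists l) -> (length S <= length l)%nat.
Proof.
  induction l as [|x l IH] in S |- *; simpl; intros H.
  - destruct H as [<-|[]]; simpl; lia.
  - apply in_app_or in H as [H|H]; [specialize (IH S H); lia|].
    apply in_map_iff in H as [S' [<- H]]. specialize (IH S' H); simpl; lia.
Qed.

Lemma fold_right_rsum {A} (f : A -> R) L : fold_right Rplus 0 (map f L) = rsum f L.
Proof. induction L; simpl; auto; rewrite IHL; auto. Qed.

Lemma prob_as_sum {E} p (l : list E) A :
  fold_right Rplus 0 (map (fun S => if excluded_middle_informative (A S)
     then p ^ length S * (1 - p) ^ (length l - length S) else 0) (sublists l)) = prob p l A.
Proof.
  rewrite fold_right_rsum. induction l as [|x l IH] in A |- *.
  - simpl. destruct (excluded_middle_informative (A [])); simpl; ring.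
  - cbn [sublists prob]. rewrite rsum_app, rsum_map, <- (IH A), <- (IH (fun S => A (x :: S))), <- !rsum_scal.
    change (length (x :: l)) with (S (length l)).
    f_equal; apply rsum_ext; intros T HT; pose proof (sublists_length l T HT).
    + destruct (excluded_middle_informative (A T)); [|ring].
      rewrite Nat.sub_succ_l by auto. rewrite <- tech_pow_Rmult. ring.
    + change (length (x :: T)) with (S (length T)).
      destruct (excluded_middle_informative (A (x :: T))); [|ring].
      rewrite Nat.sub_succ, <- tech_pow_Rmult. ring.
Qed.

Lemma prob_realizable_eq n p : prob_realizable n p = prob p (pairs n) (realizable_R1 n).
Proof. apply prob_as_sum. Qed.

Lemma prob_incl {E} p (l : list E) F : 0 <= p <= 1 -> NoDup l -> NoDup F -> incl F l ->
  prob p l (fun S => incl F S) = p ^ length F.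
Proof.
  induction l as [|x l IH] in F |- *; intros Hp Hl HF Hi; simpl.
  - destruct F as [|y F]; [|exfalso; apply (Hi y); left; auto].
    destruct (excluded_middle_informative (incl [] [])) as [|n]; [auto | exfalso; apply n, incl_refl].
  - apply NoDup_cons_iff in Hl as [Hxl Hl].
    destruct (classic (In x F)) as [Hx|Hx].
    + destruct (in_split x F Hx) as (P1 & P2 & ->).
      pose proof (NoDup_remove_1 _ _ _ HF) as HF1. pose proof (NoDup_remove_2 _ _ _ HF) as HF2.
      rewrite (prob_eq0 p l (fun S => incl (P1 ++ x :: P2) S)).
      2:{ intros S HS Hc. apply Hxl, HS, Hc, in_or_app; right; left; auto. }
      rewrite (prob_ext_in p l _ (fun S => incl (P1 ++ P2) S)).
      2:{ intros S HS. split; intros H z Hz.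
          - assert (In z (x :: S)) as [<-|] by (apply H; rewrite in_app_iff in *; simpl; tauto); tauto.
          - rewrite in_app_iff in Hz; destruct Hz as [|[<-|]]; [right | left | right]; auto;
            apply H, in_app_iff; auto. }
      rewrite IH, !length_app; simpl; [rewrite Nat.add_succ_r; simpl; ring | auto..].
      intros z Hz. assert (In z (x :: l)) as [<-|]; try tauto.
      apply Hi; rewrite in_app_iff in *; simpl; tauto.
    + rewrite (prob_ext p l (fun S => incl F (x :: S)) (fun S => incl F S)).
      2:{ intros S; split; intros H z Hz; [destruct (H z Hz) as [<-|]; tauto | right; auto]. }
      rewrite IH; auto; [ring|]. intros z Hz; destruct (Hi z Hz) as [<-|]; tauto.
Qed.

Lemma union_bound {E T} p (l : list E) (B : T -> list E -> Prop) (I : list T) : 0 <= p <= 1 ->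
  prob p l (fun S => exists t, In t I /\ B t S) <= rsum (fun t => prob p l (B t)) I.
Proof.
  intros Hp. induction I as [|t I IH]; simpl.
  - rewrite prob_eq0; [lra|]. intros S _ [t [[] _]].
  - eapply Rle_trans; [|apply Rplus_le_compat_l, IH].
    eapply Rle_trans; [|apply prob_or_le; auto].
    apply prob_le; auto. intros S [u [[<-|Hu] Hb]]; [left | right; exists u]; auto.
Qed.

Lemma harris_prod {E T} p (l : list E) (B : T -> list E -> Prop) (I : list T) : 0 <= p <= 1 ->
  (forall t, up_closed (B t)) ->
  rprod (fun t => 1 - prob p l (B t)) I <= prob p l (fun S => forall t, In t I -> ~ B t S).
Proof.
  intros Hp HB. induction I as [|t I IH]; simpl.
  - rewrite prob_eq1; [lra|]. intros S t [].
  - assert (Hdown : down_closed (fun S => forall u, In u I -> ~ B u S))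
      by (intros S T0 H1 H2 u Hu H3; apply (H2 u Hu); eapply HB; eauto).
    pose proof (harris p l _ _ Hp (down_closed_not _ (HB t)) Hdown) as H.
    pose proof (prob_compl p l (B t)). pose proof (prob_bounds p l (B t) Hp).
    eapply Rle_trans; [apply Rmult_le_compat_l; [lra | apply IH]|].
    replace (1 - prob p l (B t)) with (prob p l (fun S => ~ B t S)) by lra.
    eapply Rle_trans; [apply H|]. apply Req_le, prob_ext. intros S; split.
    + intros [h1 h2] u [<-|Hu]; auto.
    + intros h; split; auto.
Qed.

(** * Janson's inequality *)

Definition overlap {E T} (F : T -> list E) t u := exists e, In e (F t) /\ In e (F u).

Definition janson_delta {E T} p (l : list E) (F : T -> list E) t (I : list T) :=
  rsum (fun u => if excluded_middle_informative (overlap F t u)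
                 then prob p l (fun S => incl (F t) S /\ incl (F u) S) else 0) I.

(* Summing over [I] gives the usual Janson exponent [- mu + Delta], where
   [Delta] runs over unordered overlapping pairs. *)
Fixpoint janson_exponent {E T} p (l : list E) (F : T -> list E) (I : list T) : R :=
  match I with
  | [] => 0
  | t :: I' => - prob p l (fun S => incl (F t) S) + janson_delta p l F t I' + janson_exponent p l F I'
  end.

Section JansonStep.
Variables (E T : Type) (p : R) (l : list E) (F : T -> list E) (t : T) (I : list T).
Hypothesis Hp : 0 <= p <= 1.

Let Bt S := incl (F t) S.
Let none S := forall u, In u I -> ~ incl (F u) S.
Let none_disjoint S := forall u, In u I -> ~ overlap F t u -> ~ incl (F u) S.

Lemma prob_contains_none_disjoint :
  prob p l (fun S => Bt S /\ none_disjoint S) = prob p l Bt * prob p l none_disjoint.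
Proof.
  apply (prob_indep p l (fun e => In e (F t))).
  - intros S T0 H; split; intros Hi z Hz; apply H; auto.
  - intros S T0 H; split; intros Hi u Hu Hs Hc; apply (Hi u Hu Hs); intros z Hz;
      apply H; auto; intros Hz'; apply Hs; exists z; auto.
Qed.

(* The overlapping events are handled by a union bound, each term being
   decorrelated from [none_disjoint] by Harris' inequality. *)
Lemma prob_contains_some_overlapping :
  prob p l (fun S => Bt S /\ none_disjoint S /\ ~ none S)
  <= janson_delta p l F t I * prob p l none_disjoint.
Proof.
  unfold janson_delta. rewrite Rmult_comm, <- rsum_scal.
  eapply Rle_trans with (rsum (fun u => prob p l (fun S =>
    overlap F t u /\ ((Bt S /\ incl (F u) S) /\ none_disjoint S))) I).
  - eapply Rle_trans; [|apply union_bound; auto].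
    apply prob_le; auto. intros S (h1 & h2 & h3).
    apply NNPP; intros Hn; apply h3. intros u Hu Hi.
    destruct (classic (overlap F t u)); [apply Hn; exists u; tauto | apply (h2 u); auto].
  - apply rsum_le. intros u _. rewrite prob_const_and.
    destruct (excluded_middle_informative (overlap F t u)); [|lra].
    rewrite Rmult_comm. apply harris_up_down; auto.
    + intros S T0 HST [H1 H2]; split; eapply incl_tran; eauto.
    + intros S T0 HST H v Hv Hs Hi. apply (H v Hv Hs). eapply incl_tran; eauto.
Qed.

Lemma janson_step : prob p l none * (prob p l Bt - janson_delta p l F t I) <= prob p l (fun S => Bt S /\ none S).
Proof.
  pose proof prob_contains_none_disjoint. pose proof prob_contains_some_overlapping.
  pose proof (prob_split p l (fun S => Bt S /\ none_disjoint S) none) as Hsplit; cbv beta in Hsplit.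
  rewrite (prob_ext p l (fun S => (Bt S /\ none_disjoint S) /\ none S) (fun S => Bt S /\ none S)) in Hsplit
    by (intros S; unfold none, none_disjoint; firstorder).
  rewrite (prob_ext p l (fun S => (Bt S /\ none_disjoint S) /\ ~ none S)
             (fun S => Bt S /\ none_disjoint S /\ ~ none S)) in Hsplit by tauto.
  assert (prob p l none <= prob p l none_disjoint) by (apply prob_le; firstorder).
  pose proof (prob_bounds p l none Hp). pose proof (prob_bounds p l (fun S => Bt S /\ none S) Hp).
  destruct (Rle_dec 0 (prob p l Bt - janson_delta p l F t I)); nra.
Qed.

End JansonStep.

Lemma janson_delta_nonneg {E T} p (l : list E) (F : T -> list E) t I : 0 <= p <= 1 ->
  0 <= janson_delta p l F t I.
Proof.
  intros Hp. apply rsum_nonneg; intros u _.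
  destruct (excluded_middle_informative (overlap F t u)); [apply prob_bounds; auto | lra].
Qed.

Lemma janson {E T} p (l : list E) (F : T -> list E) (I : list T) : 0 <= p <= 1 ->
  prob p l (fun S => forall t, In t I -> ~ incl (F t) S) <= exp (janson_exponent p l F I).
Proof.
  intros Hp. induction I as [|t I IH]; simpl.
  - rewrite prob_eq1, exp_0; [lra|]. intros S t [].
  - set (none := fun S => forall u, In u I -> ~ incl (F u) S) in *.
    set (Bt := fun S => incl (F t) S).
    assert (Hnew : prob p l (fun S => forall u, t = u \/ In u I -> ~ incl (F u) S)
                   = prob p l none - prob p l (fun S => Bt S /\ none S)).
    { rewrite (prob_split p l none Bt).
      rewrite (prob_ext p l (fun S => none S /\ Bt S) (fun S => Bt S /\ none S)) by tauto.
      enough (prob p l (fun S => forall u, t = u \/ In u I -> ~ incl (F u) S)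
              = prob p l (fun S => none S /\ ~ Bt S)) by lra.
      apply prob_ext; intros S; unfold none, Bt; split; [intros H; split | intros [H1 H2] u [<-|]]; auto. }
    rewrite Hnew, exp_plus.
    assert (prob p l none * (prob p l Bt - janson_delta p l F t I) <= prob p l (fun S => Bt S /\ none S))
      by exact (janson_step E T p l F t I Hp).
    pose proof (exp_ineq1_le (- prob p l Bt + janson_delta p l F t I)).
    pose proof (prob_bounds p l none Hp). pose proof (prob_bounds p l Bt Hp).
    pose proof (janson_delta_nonneg p l F t I Hp).
    pose proof (exp_pos (janson_exponent p l F I)).
    set (J := exp (janson_exponent p l F I)) in *.
    set (X := exp (- prob p l Bt + janson_delta p l F t I)) in *.
    assert (prob p l none * (1 + (- prob p l Bt + janson_delta p l F t I)) <= J * X)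
      by (apply Rmult_le_compat; lra).
    nra.
Qed.

(** * Short path forests are distance graphs on the line *)

Definition adj (E : list (nat * nat)) a b := In (a, b) E \/ In (b, a) E.

Lemma adj_sym E a b : adj E a b -> adj E b a.
Proof. unfold adj; tauto. Qed.

Lemma adj_incl S T a b : incl S T -> adj S a b -> adj T a b.
Proof. intros H [h|h]; [left | right]; apply H; auto. Qed.

Definition loopless E := forall a b, adj E a b -> a <> b.
Definition no_claw E := forall v a b c, NoDup [a; b; c] -> adj E v a -> adj E v b -> adj E v c -> False.
Definition no_triangle E := forall a b c, NoDup [a; b; c] -> adj E a b -> adj E b c -> adj E c a -> False.
Definition no_C4 E :=
  forall a b c d, NoDup [a; b; c; d] -> adj E a b -> adj E b c -> adj E c d -> adj E d a -> False.
Definition no_P5 E :=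
  forall a b c d e, NoDup [a; b; c; d; e] -> adj E a b -> adj E b c -> adj E c d -> adj E d e -> False.

(* Equivalently: every connected component is a path with at most four vertices. *)
Definition short_path_forest E := loopless E /\ no_claw E /\ no_triangle E /\ no_C4 E /\ no_P5 E.

Definition sgn (d : bool) : Z := if d then 1%Z else (-1)%Z.

Lemma sgn_negb d : sgn (negb d) = (- sgn d)%Z.
Proof. destruct d; reflexivity. Qed.

(* The vertices below [k] are laid out on integer lines, one line per label
   [comp]; on each line the occupied positions form an interval and two
   vertices are adjacent exactly when their positions are consecutive. *)
Record line_layout (E : list (nat * nat)) (k : nat) (comp : nat -> nat) (pos : nat -> Z) : Prop := {
  comp_lt : forall a, (a < k)%nat -> (comp a < k)%nat;
  layout_inj : forall a b, (a < k)%nat -> (b < k)%nat -> comp a = comp b -> pos a = pos b -> a = b;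
  adj_layout : forall a b, (a < k)%nat -> (b < k)%nat -> adj E a b ->
    comp a = comp b /\ Z.abs (pos a - pos b) = 1%Z;
  layout_adj : forall a b, (a < k)%nat -> (b < k)%nat -> comp a = comp b ->
    Z.abs (pos a - pos b) = 1%Z -> adj E a b;
  layout_interval : forall a b m, (a < k)%nat -> (b < k)%nat -> comp a = comp b ->
    (pos a <= m <= pos b)%Z -> exists c, (c < k)%nat /\ comp c = comp a /\ pos c = m }.

Definition upd {A} (k : nat) (x : A) (f : nat -> A) := fun a => if a =? k then x else f a.

Lemma upd_eq {A} k (x : A) f : upd k x f k = x.
Proof. unfold upd; rewrite Nat.eqb_refl; auto. Qed.

Lemma upd_neq {A} k (x : A) f a : a <> k -> upd k x f a = f a.
Proof. intros H; unfold upd; rewrite (proj2 (Nat.eqb_neq a k) H); auto. Qed.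

Ltac simpl_upd := repeat (rewrite upd_eq || rewrite upd_neq by lia).

Lemma lt_S_cases a k : (a < S k)%nat -> a = k \/ (a < k)%nat.
Proof. lia. Qed.

Definition one_side (comp : nat -> nat) (pos : nat -> Z) k u d :=
  forall y, (y < k)%nat -> comp y = comp u -> (sgn d * (pos y - pos u) <= 0)%Z.

Ltac nodup_by_lia := repeat constructor; simpl; intuition (subst; lia).

Section Layout.
Variables (E : list (nat * nat)) (k : nat) (comp : nat -> nat) (pos : nat -> Z).
Hypothesis G : short_path_forest E.
Hypothesis L : line_layout E k comp pos.

Lemma layout_one_side v : (v < k)%nat ->
  (forall a b, (a < k)%nat -> (b < k)%nat -> adj E v a -> adj E v b -> a = b) ->
  exists d, one_side comp pos k v d.
Proof.
  intros Hv Hdeg.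
  destruct (classic (exists a, (a < k)%nat /\ comp a = comp v /\ (pos v < pos a)%Z)) as [(a & Ha & Hca & Hpa)|Hno].
  - exists false. intros y Hy Hcy. cbn [sgn].
    destruct (Z_lt_le_dec (pos y) (pos v)) as [Hlt|]; [|lia]. exfalso.
    destruct (layout_interval _ _ _ _ L v a (pos v + 1) Hv Ha (eq_sym Hca) ltac:(lia)) as (c1 & Hc1 & Hcc1 & Hpc1).
    destruct (layout_interval _ _ _ _ L y v (pos v - 1) Hy Hv Hcy ltac:(lia)) as (c2 & Hc2 & Hcc2 & Hpc2).
    assert (c1 = c2) as <-.
    { apply Hdeg; auto; apply (layout_adj _ _ _ _ L); auto; try congruence; lia. }
    lia.
  - exists true. intros y Hy Hcy. cbn [sgn].
    destruct (Z_le_gt_dec (pos y) (pos v)); [lia|]. exfalso; apply Hno; exists y; auto with zarith.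
Qed.

(* Between [u] and [w] on their line lie vertices which, with the new vertex [k],
   form a triangle or a 4-cycle, or contain a path on five vertices. *)
Lemma layout_no_cycle_ordered u w : (u < k)%nat -> (w < k)%nat -> adj E k u -> adj E k w ->
  comp u = comp w -> (pos u < pos w)%Z -> False.
Proof.
  intros Hu Hw Hku Hkw Hc Hlt. destruct G as (_ & _ & Htri & HC4 & HP5).
  assert (Hnext : forall m, (pos u <= m <= pos w)%Z -> exists c, (c < k)%nat /\ comp c = comp u /\ pos c = m)
    by (intros m Hm; apply (layout_interval _ _ _ _ L u w); auto).
  assert (Hadj : forall a b, (a < k)%nat -> (b < k)%nat -> comp a = comp u -> comp b = comp u ->
                  (pos b = pos a + 1)%Z -> adj E a b)
    by (intros a b Ha Hb Hca Hcb Hp; apply (layout_adj _ _ _ _ L); auto; [congruence | lia]).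
  destruct (Hnext (pos u + 1)%Z ltac:(lia)) as (c1 & Hc1 & Hcc1 & Hp1).
  destruct (Z.eq_dec (pos w) (pos u + 1)) as [Hw1|Hw1].
  { apply (Htri k u w); [nodup_by_lia | auto | apply Hadj; auto | apply adj_sym; auto]. }
  destruct (Hnext (pos u + 2)%Z ltac:(lia)) as (c2 & Hc2 & Hcc2 & Hp2).
  destruct (Z.eq_dec (pos w) (pos u + 2)) as [Hw2|Hw2].
  { apply (HC4 k u c1 w); [nodup_by_lia | auto | apply Hadj; auto; lia .. | apply adj_sym; auto]. }
  destruct (Hnext (pos u + 3)%Z ltac:(lia)) as (c3 & Hc3 & Hcc3 & Hp3).
  apply (HP5 k u c1 c2 c3); [nodup_by_lia | auto | apply Hadj; auto; lia ..].
Qed.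

Lemma layout_no_cycle u w : (u < k)%nat -> (w < k)%nat -> u <> w -> adj E k u -> adj E k w ->
  comp u <> comp w.
Proof.
  intros Hu Hw Huw Hku Hkw Hc.
  destruct (Z.lt_trichotomy (pos u) (pos w)) as [h|[h|h]].
  - exact (layout_no_cycle_ordered u w Hu Hw Hku Hkw Hc h).
  - apply Huw, (layout_inj _ _ _ _ L); auto.
  - exact (layout_no_cycle_ordered w u Hw Hu Hkw Hku (eq_sym Hc) h).
Qed.

End Layout.

Section AddVertex.
Variables (E : list (nat * nat)) (k : nat) (comp : nat -> nat) (pos : nat -> Z).
Hypothesis Hloop : loopless E.
Hypothesis L : line_layout E k comp pos.

Ltac split_new a := let Ha := fresh "H" a in
  match goal with H : (a < S k)%nat |- _ => destruct (lt_S_cases a k H) as [->|Ha] end.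

Lemma layout_lift_interval a b m : (a < k)%nat -> (b < k)%nat -> comp a = comp b -> (pos a <= m <= pos b)%Z ->
  forall comp' pos', (forall c, (c < k)%nat -> comp' c = comp c /\ pos' c = pos c) ->
  exists c, (c < S k)%nat /\ comp' c = comp' a /\ pos' c = m.
Proof.
  intros Ha Hb Hab Hm comp' pos' Hagree.
  destruct (layout_interval _ _ _ _ L a b m Ha Hb Hab Hm) as (c & Hc & Hcc & Hpc).
  exists c. destruct (Hagree c Hc), (Hagree a Ha). repeat split; [lia | congruence | congruence].
Qed.

Lemma layout_add_isolated : (forall a, (a < k)%nat -> ~ adj E k a) ->
  line_layout E (S k) (upd k k comp) (upd k 0%Z pos).
Proof.
  intros Hiso. pose proof (comp_lt _ _ _ _ L) as Hlt.
  assert (Hagree : forall c, (c < k)%nat -> upd k k comp c = comp c /\ upd k 0%Z pos c = pos c)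
    by (intros c Hc; simpl_upd; auto).
  constructor.
  - intros a Ha. split_new a; simpl_upd; [lia | specialize (Hlt a Ha0); lia].
  - intros a b Ha Hb. split_new a; split_new b; simpl_upd; auto.
    + intros Hc; specialize (Hlt b Hb0); lia.
    + intros Hc; specialize (Hlt a Ha0); lia.
    + apply (layout_inj _ _ _ _ L); auto.
  - intros a b Ha Hb Hab. split_new a; split_new b; simpl_upd.
    + now destruct (Hloop k k Hab).
    + contradiction (Hiso b Hb0 Hab).
    + contradiction (Hiso a Ha0 (adj_sym _ _ _ Hab)).
    + apply (adj_layout _ _ _ _ L); auto.
  - intros a b Ha Hb. split_new a; split_new b; simpl_upd.
    + lia.
    + intros Hc; specialize (Hlt b Hb0); lia.
    + intros Hc; specialize (Hlt a Ha0); lia.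
    + apply (layout_adj _ _ _ _ L); auto.
  - intros a b m Ha Hb. split_new a; split_new b; simpl_upd.
    + intros _ Hm. exists k. simpl_upd. repeat split; lia.
    + intros Hc; specialize (Hlt b Hb0); lia.
    + intros Hc; specialize (Hlt a Ha0); lia.
    + intros Hab Hm. rewrite <- (upd_neq k k comp a) by lia.
      apply (layout_lift_interval a b m); auto.
Qed.

Section OneSide.
Variables (u : nat) (d : bool).
Hypothesis Hu : (u < k)%nat.
Hypothesis Hside : one_side comp pos k u d.

Lemma one_side_near y : (y < k)%nat -> comp y = comp u ->
  (Z.abs (pos y - (pos u + sgn d)) <= 1)%Z -> y = u.
Proof.
  intros Hy Hc Hd. specialize (Hside y Hy Hc).
  apply (layout_inj _ _ _ _ L); auto. destruct d; cbn [sgn] in *; lia.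
Qed.

Lemma one_side_interval y m : (y < k)%nat -> comp y = comp u ->
  ((pos y <= m <= pos u + sgn d) \/ (pos u + sgn d <= m <= pos y))%Z -> m <> (pos u + sgn d)%Z ->
  exists c, (c < k)%nat /\ comp c = comp u /\ pos c = m.
Proof.
  intros Hy Hc Hm Hne. specialize (Hside y Hy Hc).
  destruct d; cbn [sgn] in *.
  - destruct (layout_interval _ _ _ _ L y u m Hy Hu Hc ltac:(lia)) as (c & ? & ? & ?).
    exists c; repeat split; congruence.
  - apply (layout_interval _ _ _ _ L u y m Hu Hy (eq_sym Hc)); lia.
Qed.

End OneSide.

Lemma layout_add_leaf u d : (u < k)%nat -> adj E k u -> (forall a, (a < k)%nat -> adj E k a -> a = u) ->
  one_side comp pos k u d ->
  line_layout E (S k) (upd k (comp u) comp) (upd k (pos u + sgn d)%Z pos).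
Proof.
  intros Hu Hku Honly Hside. pose proof (comp_lt _ _ _ _ L) as Hlt.
  assert (Hagree : forall c, (c < k)%nat -> upd k (comp u) comp c = comp c /\ upd k (pos u + sgn d)%Z pos c = pos c)
    by (intros c Hc; simpl_upd; auto).
  assert (Hsgn : Z.abs (sgn d) = 1%Z) by (destruct d; reflexivity).
  constructor.
  - intros a Ha. split_new a; simpl_upd; [specialize (Hlt u Hu) | specialize (Hlt a Ha0)]; lia.
  - intros a b Ha Hb. split_new a; split_new b; simpl_upd; auto.
    + intros Hc Hp. assert (b = u) as -> by (apply (one_side_near u d); auto; lia). lia.
    + intros Hc Hp. assert (a = u) as -> by (apply (one_side_near u d); auto; lia). lia.
    + apply (layout_inj _ _ _ _ L); auto.
  - intros a b Ha Hb Hab. split_new a; split_new b; simpl_upd.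
    + now destruct (Hloop k k Hab).
    + rewrite (Honly b Hb0 Hab). split; [auto | lia].
    + rewrite (Honly a Ha0 (adj_sym _ _ _ Hab)). split; [auto | lia].
    + apply (adj_layout _ _ _ _ L); auto.
  - intros a b Ha Hb. split_new a; split_new b; simpl_upd.
    + lia.
    + intros Hc Hp. rewrite (one_side_near u d Hu Hside b); auto; lia.
    + intros Hc Hp. rewrite (one_side_near u d Hu Hside a); [apply adj_sym | ..]; auto; lia.
    + apply (layout_adj _ _ _ _ L); auto.
  - intros a b m Ha Hb. split_new a; split_new b; simpl_upd.
    + intros _ Hm. exists k. simpl_upd. repeat split; lia.
    + intros Hc Hm. destruct (Z.eq_dec m (pos u + sgn d)) as [->|Hne].
      * exists k; simpl_upd; auto.
      * destruct (one_side_interval u d Hu Hside b m Hb0 (eq_sym Hc) ltac:(lia) Hne) as (c & Hc' & Hcc & Hpc).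
        exists c; simpl_upd; repeat split; [lia | congruence | auto].
    + intros Hc Hm. destruct (Z.eq_dec m (pos u + sgn d)) as [->|Hne].
      * exists k; simpl_upd; auto.
      * destruct (one_side_interval u d Hu Hside a m Ha0 Hc ltac:(lia) Hne) as (c & Hc' & Hcc & Hpc).
        exists c; simpl_upd; repeat split; [lia | congruence | auto].
    + intros Hab Hm. rewrite <- (upd_neq k (comp u) comp a) by lia.
      apply (layout_lift_interval a b m); auto.
Qed.

Section Join.
Variables (u w : nat) (d : bool).
Hypotheses (Hu : (u < k)%nat) (Hw : (w < k)%nat) (Hcuw : comp u <> comp w).
Hypotheses (Hku : adj E k u) (Hkw : adj E k w).
Hypothesis Honly : forall a, (a < k)%nat -> adj E k a -> a = u \/ a = w.
Hypothesis Hside_u : one_side comp pos k u d.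
Hypothesis Hside_w : one_side comp pos k w (negb d).
Hypothesis Hpos_w : pos w = (pos u + 2 * sgn d)%Z.

Let merged y := if comp y =? comp w then comp u else comp y.
Let comp' := upd k (comp u) merged.
Let pos' := upd k (pos u + sgn d)%Z pos.

Lemma merged_cases a b : merged a = merged b ->
  comp a = comp b \/ (comp a = comp u /\ comp b = comp w) \/ (comp a = comp w /\ comp b = comp u).
Proof. unfold merged; destruct (Nat.eqb_spec (comp a) (comp w)), (Nat.eqb_spec (comp b) (comp w)); intuition congruence. Qed.

Lemma merged_of_u_or_w y : merged y = comp u -> comp y = comp u \/ comp y = comp w.
Proof. unfold merged; destruct (Nat.eqb_spec (comp y) (comp w)); auto. Qed.

Lemma merged_u_w y : comp y = comp u \/ comp y = comp w -> merged y = comp u.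
Proof. unfold merged; destruct (Nat.eqb_spec (comp y) (comp w)); intuition congruence. Qed.

Lemma block_w_far y : (y < k)%nat -> comp y = comp w -> (sgn d * (pos y - pos u) >= 2)%Z.
Proof. intros Hy Hc. pose proof (Hside_w y Hy Hc) as H. rewrite sgn_negb in H. destruct d; cbn [sgn] in *; lia. Qed.

Lemma merged_near y : (y < k)%nat -> merged y = comp u ->
  (Z.abs (pos y - (pos u + sgn d)) <= 1)%Z -> y = u \/ y = w.
Proof.
  intros Hy Hm Hd. destruct (merged_of_u_or_w y Hm) as [Hc|Hc].
  - left; apply (one_side_near u d); auto.
  - right; apply (one_side_near w (negb d)); auto. rewrite sgn_negb. lia.
Qed.

Lemma merged_interval y m : (y < k)%nat -> merged y = comp u ->
  ((pos y <= m <= pos u + sgn d) \/ (pos u + sgn d <= m <= pos y))%Z ->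
  exists c, (c < S k)%nat /\ comp' c = comp u /\ pos' c = m.
Proof.
  intros Hy Hm Hr. unfold comp', pos'.
  destruct (Z.eq_dec m (pos u + sgn d)) as [->|Hne]; [exists k; simpl_upd; auto|].
  assert (exists c, (c < k)%nat /\ (comp c = comp u \/ comp c = comp w) /\ pos c = m) as (c & Hc & Hcc & Hpc).
  { destruct (merged_of_u_or_w y Hm) as [Hcy|Hcy].
    - destruct (one_side_interval u d Hu Hside_u y m Hy Hcy Hr Hne) as (c & ? & ? & ?); eauto.
    - destruct (one_side_interval w (negb d) Hw Hside_w y m Hy Hcy ltac:(rewrite sgn_negb; lia)
        ltac:(rewrite sgn_negb; lia)) as (c & ? & ? & ?); eauto. }
  exists c; simpl_upd; repeat split; [lia | apply merged_u_w | ]; auto.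
Qed.

Lemma merged_blocks_apart a b : (a < k)%nat -> (b < k)%nat -> comp a = comp u -> comp b = comp w ->
  (Z.abs (pos a - pos b) >= 2)%Z.
Proof.
  intros Ha Hb Hca Hcb. pose proof (Hside_u a Ha Hca). pose proof (block_w_far b Hb Hcb).
  destruct d; cbn [sgn] in *; lia.
Qed.

Lemma merged_layout_interval a b m : (a < S k)%nat -> (b < S k)%nat -> comp' a = comp' b ->
  (pos' a <= m <= pos' b)%Z -> exists c, (c < S k)%nat /\ comp' c = comp' a /\ pos' c = m.
Proof.
  intros Ha Hb. unfold comp', pos'. split_new a; split_new b; simpl_upd.
  - intros _ Hm. exists k; simpl_upd; split; auto; lia.
  - intros Hc Hm. apply (merged_interval b m); auto.
  - intros Hc Hm. rewrite Hc. apply (merged_interval a m); auto.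
  - intros Hc Hm. destruct (merged_cases a b Hc) as [Hab|[[H1 H2]|[H1 H2]]].
    + destruct (layout_interval _ _ _ _ L a b m Ha0 Hb0 Hab Hm) as (c & Hc' & Hcc & Hpc).
      exists c; simpl_upd; repeat split; [lia | unfold merged; rewrite Hcc | ]; auto.
    + rewrite (merged_u_w a) by auto.
      destruct (Z_le_gt_dec m (pos u + sgn d)); [apply (merged_interval a m) | apply (merged_interval b m)];
        auto; try lia; apply merged_u_w; auto.
    + rewrite (merged_u_w a) by auto.
      destruct (Z_le_gt_dec m (pos u + sgn d)); [apply (merged_interval a m) | apply (merged_interval b m)];
        auto; try lia; apply merged_u_w; auto.
Qed.

Lemma layout_join : line_layout E (S k) comp' pos'.
Proof.
  pose proof (comp_lt _ _ _ _ L) as Hlt.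
  assert (Hsgn : Z.abs (sgn d) = 1%Z) by (destruct d; reflexivity).
  assert (Hmu : merged u = comp u) by (apply merged_u_w; auto).
  assert (Hmw : merged w = comp u) by (apply merged_u_w; auto).
  pose proof merged_blocks_apart as Hcross.
  constructor; [unfold comp', pos' .. | exact merged_layout_interval].
  - intros a Ha. split_new a; simpl_upd; [specialize (Hlt u Hu); lia|].
    unfold merged; destruct (Nat.eqb_spec (comp a) (comp w)); [specialize (Hlt u Hu) | specialize (Hlt a Ha0)]; lia.
  - intros a b Ha Hb. split_new a; split_new b; simpl_upd; auto.
    + intros Hc Hp. destruct (merged_near b Hb0 (eq_sym Hc) ltac:(lia)) as [-> | ->]; lia.
    + intros Hc Hp. destruct (merged_near a Ha0 Hc ltac:(lia)) as [-> | ->]; lia.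
    + intros Hc Hp. destruct (merged_cases a b Hc) as [Hab|[[H1 H2]|[H1 H2]]].
      * apply (layout_inj _ _ _ _ L); auto.
      * specialize (Hcross a b Ha0 Hb0 H1 H2); lia.
      * specialize (Hcross b a Hb0 Ha0 H2 H1); lia.
  - intros a b Ha Hb Hab. split_new a; split_new b; simpl_upd.
    + now destruct (Hloop k k Hab).
    + destruct (Honly b Hb0 Hab) as [-> | ->]; split; auto; lia.
    + destruct (Honly a Ha0 (adj_sym _ _ _ Hab)) as [-> | ->]; split; auto; lia.
    + destruct (adj_layout _ _ _ _ L a b Ha0 Hb0 Hab) as [Hc Hd].
      split; [unfold merged; rewrite Hc | ]; auto.
  - intros a b Ha Hb. split_new a; split_new b; simpl_upd.
    + lia.
    + intros Hc Hd. destruct (merged_near b Hb0 (eq_sym Hc) ltac:(lia)) as [-> | ->]; auto.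
    + intros Hc Hd. destruct (merged_near a Ha0 Hc ltac:(lia)) as [-> | ->]; apply adj_sym; auto.
    + intros Hc Hd. destruct (merged_cases a b Hc) as [Hab|[[H1 H2]|[H1 H2]]].
      * apply (layout_adj _ _ _ _ L); auto.
      * specialize (Hcross a b Ha0 Hb0 H1 H2); lia.
      * specialize (Hcross b a Hb0 Ha0 H2 H1); lia.
Qed.

End Join.

Lemma layout_move (c : nat) (t b : Z) : (t = 1 \/ t = -1)%Z ->
  line_layout E k comp (fun y => if Nat.eqb (comp y) c then (t * pos y + b)%Z else pos y).
Proof.
  intros Ht.
  constructor.
  - apply (comp_lt _ _ _ _ L).
  - intros a a' Ha Ha' Hc. rewrite Hc. intros Hp. apply (layout_inj _ _ _ _ L); auto. destruct (comp a' =? c); destruct Ht; subst; lia.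
  - intros a a' Ha Ha' Hadj. destruct (adj_layout _ _ _ _ L a a' Ha Ha' Hadj) as [Hc Hd].
    split; auto. rewrite Hc. destruct (comp a' =? c); destruct Ht; subst; lia.
  - intros a a' Ha Ha' Hc. rewrite Hc. intros Hd. apply (layout_adj _ _ _ _ L); auto.
    destruct (comp a' =? c); destruct Ht; subst; lia.
  - intros a a' m Ha Ha' Hc. rewrite Hc. destruct (comp a' =? c) eqn:Hca'.
    + intros Hm. destruct Ht; subst t.
      * destruct (layout_interval _ _ _ _ L a a' (m - b) Ha Ha' Hc ltac:(lia)) as (x & Hx & Hcx & Hpx).
        exists x; rewrite Hcx, Hc, Hca'; repeat split; auto; lia.
      * destruct (layout_interval _ _ _ _ L a' a (b - m) Ha' Ha (eq_sym Hc) ltac:(lia)) as (x & Hx & Hcx & Hpx).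
        exists x; rewrite Hcx, Hca'; repeat split; auto; lia.
    + intros Hm. destruct (layout_interval _ _ _ _ L a a' m Ha Ha' Hc Hm) as (x & Hx & Hcx & Hpx).
      exists x; rewrite Hcx, Hc, Hca'; auto.
Qed.

End AddVertex.

Lemma claw_free_at_most_one_nbr E k v : no_claw E -> adj E v k ->
  forall a b, (a < k)%nat -> (b < k)%nat -> adj E v a -> adj E v b -> a = b.
Proof.
  intros Hclaw Hvk a b Ha Hb Hva Hvb. destruct (Nat.eq_dec a b) as [|Hab]; auto.
  exfalso; apply (Hclaw v a b k); auto. nodup_by_lia.
Qed.

Lemma layout_add_bridge E k comp pos u w : short_path_forest E -> line_layout E k comp pos ->
  (u < k)%nat -> (w < k)%nat -> u <> w -> adj E k u -> adj E k w ->
  (forall a, (a < k)%nat -> adj E k a -> a = u \/ a = w) ->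
  exists comp' pos', line_layout E (S k) comp' pos'.
Proof.
  intros G L Hu Hw Huw Hku Hkw Honly. pose proof G as (Hloop & Hclaw & _).
  assert (Hcuw := layout_no_cycle E k comp pos G L u w Hu Hw Huw Hku Hkw).
  destruct (layout_one_side E k comp pos L u Hu
    (claw_free_at_most_one_nbr E k u Hclaw (adj_sym _ _ _ Hku))) as [du Hdu].
  destruct (layout_one_side E k comp pos L w Hw
    (claw_free_at_most_one_nbr E k w Hclaw (adj_sym _ _ _ Hkw))) as [dw Hdw].
  (* reflect and translate the component of [w] so that it continues the line of [u]
     beyond the new vertex, which will sit at [pos u + sgn du] *)
  set (t := (- sgn du * sgn dw)%Z).
  set (pos' := fun y => if Nat.eqb (comp y) (comp w) then (t * pos y + (pos u + 2 * sgn du - t * pos w))%Z else pos y).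
  assert (Ht : (t = 1 \/ t = -1)%Z) by (unfold t; destruct du, dw; cbn [sgn]; lia).
  assert (L' := layout_move E k comp pos L (comp w) t (pos u + 2 * sgn du - t * pos w) Ht). fold pos' in L'.
  assert (Hpu : forall y, comp y = comp u -> pos' y = pos y).
  { intros y Hy; unfold pos'; destruct (Nat.eqb_spec (comp y) (comp w)); congruence. }
  assert (Hpw : forall y, comp y = comp w -> pos' y = (t * pos y + (pos u + 2 * sgn du - t * pos w))%Z).
  { intros y Hy; unfold pos'; rewrite Hy, Nat.eqb_refl; auto. }
  exists (upd k (comp u) (fun y => if Nat.eqb (comp y) (comp w) then comp u else comp y)),
         (upd k (pos' u + sgn du)%Z pos').
  apply (layout_join E k comp pos' Hloop L' u w du); auto.
  - intros y Hy Hc. rewrite !Hpu by auto. apply Hdu; auto.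
  - intros y Hy Hc. rewrite !Hpw by auto. specialize (Hdw y Hy Hc).
    unfold t; destruct du, dw; cbn [sgn negb] in *; lia.
  - rewrite Hpw, Hpu by auto. lia.
Qed.

Lemma short_path_forest_layout E : short_path_forest E ->
  forall k, exists comp pos, line_layout E k comp pos.
Proof.
  intros G. pose proof G as (Hloop & Hclaw & _). induction k as [|k IH].
  - exists (fun _ => 0%nat), (fun _ => 0%Z). constructor; intros; lia.
  - destruct IH as (comp & pos & L).
    destruct (classic (exists u, (u < k)%nat /\ adj E k u)) as [(u & Hu & Hku)|Hnone].
    + destruct (classic (exists w, (w < k)%nat /\ adj E k w /\ w <> u)) as [(w & Hw & Hkw & Hwu)|Hone].
      * apply (layout_add_bridge E k comp pos u w); auto.
        intros a Ha Hka. destruct (Nat.eq_dec a u); auto. destruct (Nat.eq_dec a w); auto.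
        exfalso. apply (Hclaw k u w a); auto. nodup_by_lia.
      * destruct (layout_one_side E k comp pos L u Hu
          (claw_free_at_most_one_nbr E k u Hclaw (adj_sym _ _ _ Hku))) as [d Hd].
        exists (upd k (comp u) comp), (upd k (pos u + sgn d)%Z pos).
        apply layout_add_leaf; auto.
        intros a Ha Hka. destruct (Nat.eq_dec a u); auto. exfalso; apply Hone; eauto.
    + exists (upd k k comp), (upd k 0%Z pos). apply layout_add_isolated; auto.
      intros a Ha Hka; apply Hnone; eauto.
Qed.

Lemma in_pairs n i j : In (i, j) (pairs n) <-> (i < j < n)%nat.
Proof.
  unfold pairs. rewrite in_flat_map. split.
  - intros (x & Hx & Hi). apply in_seq in Hx. apply in_map_iff in Hi as (y & Hy & Hy').
    inversion Hy; subst. apply in_seq in Hy'. lia.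
  - intros H. exists j. split; [apply in_seq; lia|]. apply in_map_iff. exists i. split; auto. apply in_seq; lia.
Qed.

Lemma adj_bounds E n a b : incl E (pairs n) -> adj E a b -> a <> b /\ (a < n)%nat /\ (b < n)%nat.
Proof. intros Hi [H|H]; apply Hi, in_pairs in H; lia. Qed.

(* Line [c] of the layout is placed at the offset [c / (n + 1)], so distinct lines never meet. *)
Lemma short_path_forest_realizable n E : incl E (pairs n) -> short_path_forest E -> realizable_R1 n E.
Proof.
  intros Hi G. destruct (short_path_forest_layout E G n) as (comp & pos & L).
  exists (fun a => IZR (pos a) + INR (comp a) / INR (S n)).
  assert (HN : 0 < INR (S n)) by (apply lt_0_INR; lia).
  split.
  - intros i j Hin Hjn Heq.
    assert (HZ : (pos i * Z.of_nat (S n) + Z.of_nat (comp i) = pos j * Z.of_nat (S n) + Z.of_nat (comp j))%Z).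
    { apply eq_IZR. rewrite !plus_IZR, !mult_IZR, <- !INR_IZR_INZ.
      apply (Rmult_eq_compat_r (INR (S n))) in Heq. field_simplify in Heq; lra. }
    pose proof (comp_lt _ _ _ _ L i Hin). pose proof (comp_lt _ _ _ _ L j Hjn).
    assert (pos i = pos j) by nia.
    apply (layout_inj _ _ _ _ L); auto; nia.
  - intros [i j] He. pose proof (Hi _ He) as Hp. apply in_pairs in Hp. simpl.
    destruct (adj_layout _ _ _ _ L i j) as [Hc Hd]; [lia | lia | left; auto |].
    rewrite Hc. replace (_ + _ - _) with (IZR (pos i - pos j)) by (rewrite minus_IZR; ring).
    rewrite <- abs_IZR, Hd. reflexivity.
Qed.

(** * Claws *)

Lemma pairs_nodup n : NoDup (pairs n).
Proof.
  unfold pairs. generalize (seq_NoDup n 0). generalize (seq 0 n) as L.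
  induction L as [|j L IH]; intros ND; simpl; [constructor|]. apply NoDup_cons_iff in ND as [Hj ND].
  apply NoDup_app; auto.
  - apply NoDup_map_NoDup_ForallPairs; [|apply seq_NoDup]. intros a b _ _ H; inversion H; auto.
  - intros e He1 He2. apply in_map_iff in He1 as (i & <- & _).
    apply in_flat_map in He2 as (j' & Hj' & He). apply in_map_iff in He as (i' & Heq & _).
    inversion Heq; subst. contradiction.
Qed.

Definition edge (a b : nat) : nat * nat := if a <? b then (a, b) else (b, a).

Lemma edge_in_pairs n a b : a <> b -> (a < n)%nat -> (b < n)%nat -> In (edge a b) (pairs n).
Proof. intros. unfold edge. destruct (Nat.ltb_spec a b); apply in_pairs; lia. Qed.

Lemma edge_inj a b c d : edge a b = edge c d -> (a = c /\ b = d) \/ (a = d /\ b = c).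
Proof. unfold edge. intros He; destruct (Nat.ltb_spec a b), (Nat.ltb_spec c d); inversion He; subst; auto. Qed.

Lemma adj_edge E n a b : incl E (pairs n) -> adj E a b -> In (edge a b) E.
Proof.
  intros Hi [H|H]; unfold edge.
  - pose proof (proj1 (in_pairs n a b) (Hi _ H)). destruct (Nat.ltb_spec a b); [auto | lia].
  - pose proof (proj1 (in_pairs n b a) (Hi _ H)). destruct (Nat.ltb_spec a b); [lia | auto].
Qed.

Lemma edge_adj E a b : In (edge a b) E -> adj E a b.
Proof. unfold edge, adj. destruct (a <? b); auto. Qed.

Lemma prob_edges n p F : 0 <= p <= 1 -> NoDup F -> incl F (pairs n) ->
  prob p (pairs n) (fun S => incl F S) = p ^ length F.
Proof. intros; apply prob_incl; auto. apply pairs_nodup. Qed.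

Fixpoint choose {A} (k : nat) (L : list A) : list (list A) :=
  match k, L with
  | O, _ => [[]]
  | S _, [] => []
  | S k', x :: L' => map (cons x) (choose k' L') ++ choose k L'
  end.

Fixpoint falling (m k : nat) : nat :=
  match k with O => 1 | S k' => m * falling (m - 1) k' end.

Lemma falling_S m k : falling m (S k) = (falling m k * (m - k))%nat.
Proof. induction k as [|k IH] in m |- *; simpl in *; [lia|]. rewrite IH. replace (m - 1 - k)%nat with (m - S k)%nat; lia. Qed.

Lemma falling_lt m k : (m < k)%nat -> falling m k = 0%nat.
Proof. intros H. destruct k as [|k]; [lia|]. rewrite falling_S. induction k as [|k IH]; simpl in *; nia. Qed.

Lemma choose_length {A} k (L : list A) : (fact k * length (choose k L) = falling (length L) k)%nat.
Proof.
  induction L as [|x L IH] in k |- *; destruct k as [|k]; try (simpl; lia).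
  change (length (choose (S k) (x :: L))) with (length (map (cons x) (choose k L) ++ choose (S k) L)).
  rewrite length_app, length_map.
  change (falling (length (x :: L)) (S k)) with (S (length L) * falling (S (length L) - 1) k)%nat.
  rewrite Nat.sub_1_r. cbn [Nat.pred].
  pose proof (IH k) as H1. pose proof (IH (S k)) as H2. rewrite falling_S in H2.
  change (fact (S k)) with (S k * fact k)%nat in *.
  destruct (le_lt_dec k (length L)); [nia|]. rewrite falling_lt in * by lia. nia.
Qed.

Lemma choose_in {A} k (L : list A) t : In t (choose k L) -> length t = k /\ incl t L.
Proof.
  induction L as [|x L IH] in k, t |- *; destruct k as [|k]; simpl;
    intros Ht; try (destruct Ht as [<-|[]]; split; [auto | apply incl_nil_l]); [destruct Ht|].
  apply in_app_or in Ht as [Ht|Ht].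
  - apply in_map_iff in Ht as (s & <- & Hs). destruct (IH k s Hs).
    split; [simpl; auto | apply incl_cons; [left; auto | apply incl_tl; auto]].
  - destruct (IH (S k) t Ht). split; [auto | apply incl_tl; auto].
Qed.

Lemma choose_nodup {A} k (L : list A) : NoDup L -> NoDup (choose k L).
Proof.
  induction L as [|x L IH] in k |- *; intros ND; destruct k as [|k]; simpl; repeat constructor; auto.
  apply NoDup_cons_iff in ND as [Hx ND]. apply NoDup_app; auto.
  - apply NoDup_map_NoDup_ForallPairs; auto. intros a b _ _ H; inversion H; auto.
  - intros t Ht1 Ht2. apply in_map_iff in Ht1 as (s & <- & _).
    apply Hx, (proj2 (choose_in _ _ _ Ht2)); left; auto.
Qed.

Lemma choose_sorted k L t : StronglySorted lt L -> In t (choose k L) -> StronglySorted lt t.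
Proof.
  induction L as [|x L IH] in k, t |- *; destruct k as [|k]; simpl; intros HL Ht;
    try (destruct Ht as [<-|[]]; constructor); [destruct Ht|].
  apply StronglySorted_inv in HL as [HL Hx].
  apply in_app_or in Ht as [Ht|Ht]; [|eauto].
  apply in_map_iff in Ht as (s & <- & Hs). constructor; eauto.
  apply Forall_forall. intros y Hy. eapply Forall_forall; eauto. apply (proj2 (choose_in k L s Hs)); auto.
Qed.

Lemma in_choose k L t : StronglySorted lt L -> StronglySorted lt t -> length t = k -> incl t L ->
  In t (choose k L).
Proof.
  induction L as [|x L IH] in k, t |- *; intros HL Ht Hlen Hincl.
  - destruct t as [|y t]; [simpl in Hlen; subst k; simpl; auto | exfalso; apply (Hincl y); left; auto].
  - destruct t as [|y t]; [simpl in Hlen; subst k; simpl; auto|]. destruct k as [|k]; [discriminate|]. simpl.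
    apply StronglySorted_inv in HL as [HL Hx]. apply StronglySorted_inv in Ht as [Ht Hy].
    rewrite Forall_forall in Hx, Hy.
    assert (Hlarge : forall z, In z (y :: t) -> z <> x -> In z L)
      by (intros z Hz Hzx; destruct (Hincl z Hz); [congruence | auto]).
    apply in_or_app. destruct (Nat.eq_dec y x) as [->|Hyx].
    + left. apply in_map. apply IH; auto.
      intros z Hz. apply Hlarge; [right; auto|]. specialize (Hy z Hz). lia.
    + right. assert (Hyl : In y L) by (apply Hlarge; [left|]; auto). specialize (Hx y Hyl).
      apply IH; auto; [constructor; auto; apply Forall_forall; auto|].
      intros z Hz. apply Hlarge; auto. destruct Hz as [<-|Hz]; [lia|]. specialize (Hy z Hz). lia.
Qed.

(* A claw is recorded as its centre followed by its three leaves in increasing order. *)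
Definition others n v := seq 0 v ++ seq (S v) (n - S v).

Lemma seq_sorted a m : StronglySorted lt (seq a m).
Proof.
  revert a; induction m; intros a; simpl; constructor; auto.
  apply Forall_forall; intros y Hy; apply in_seq in Hy; lia.
Qed.

Lemma sorted_app l1 l2 : StronglySorted lt l1 -> StronglySorted lt l2 ->
  (forall x y, In x l1 -> In y l2 -> (x < y)%nat) -> StronglySorted lt (l1 ++ l2).
Proof.
  induction l1 as [|x l1 IH]; simpl; intros H1 H2 H; auto.
  apply StronglySorted_inv in H1 as [H1 Hx]. constructor; auto.
  apply Forall_forall; intros y Hy. apply in_app_or in Hy as [Hy|Hy]; auto.
  eapply Forall_forall; eauto.
Qed.

Lemma others_sorted n v : StronglySorted lt (others n v).
Proof.
  apply sorted_app; try apply seq_sorted.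
  intros x y Hx Hy; apply in_seq in Hx; apply in_seq in Hy; lia.
Qed.

Lemma in_others n v y : (v < n)%nat -> In y (others n v) <-> (y < n)%nat /\ y <> v.
Proof. intros Hv; unfold others; rewrite in_app_iff, !in_seq; lia. Qed.

Lemma others_length n v : (v < n)%nat -> length (others n v) = (n - 1)%nat.
Proof. intros; unfold others; rewrite length_app, !length_seq; lia. Qed.

Definition claws n := flat_map (fun v => map (cons v) (choose 3 (others n v))) (seq 0 n).

Lemma in_claws n t : In t (claws n) <-> exists v x y z, t = [v; x; y; z] /\ (v < n)%nat /\
  (x < y < z)%nat /\ (z < n)%nat /\ v <> x /\ v <> y /\ v <> z.
Proof.
  unfold claws. rewrite in_flat_map. split.
  - intros (v & Hv & Ht). apply in_seq in Hv. apply in_map_iff in Ht as (s & <- & Hs).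
    pose proof (choose_sorted 3 _ s (others_sorted n v) Hs) as Hsort.
    destruct (choose_in 3 _ s Hs) as [Hlen Hincl].
    destruct s as [|x [|y [|z [|]]]]; try discriminate.
    repeat match goal with H : StronglySorted _ (_ :: _) |- _ => apply StronglySorted_inv in H as [? ?] end.
    repeat match goal with H : Forall _ (_ :: _) |- _ => inversion H; subst; clear H end.
    assert (Hb : forall w, In w [x; y; z] -> (w < n)%nat /\ w <> v)
      by (intros w Hw; apply (in_others n v); [lia | auto]).
    destruct (Hb x ltac:(simpl; auto)), (Hb y ltac:(simpl; auto)), (Hb z ltac:(simpl; auto)).
    exists v, x, y, z. repeat split; auto; lia.
  - intros (v & x & y & z & -> & Hv & Hxyz & Hz & Hx & Hy & Hz'). exists v. split; [apply in_seq; lia|].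
    apply in_map. apply in_choose; [apply others_sorted | | auto |].
    + repeat constructor; lia.
    + intros w Hw. apply in_others; [auto|]. simpl in Hw; lia.
Qed.

Lemma claws_nodup n : NoDup (claws n).
Proof.
  unfold claws. generalize (seq_NoDup n 0). generalize (seq 0 n) as L.
  induction L as [|v L IH]; intros ND; simpl; [constructor|]. apply NoDup_cons_iff in ND as [Hv ND].
  apply NoDup_app; auto.
  - apply NoDup_map_NoDup_ForallPairs; [intros a b _ _ H; inversion H; auto|].
    apply choose_nodup, NoDup_app; try apply seq_NoDup.
    intros x Hx1 Hx2; apply in_seq in Hx1; apply in_seq in Hx2; lia.
  - intros t Ht1 Ht2. apply in_map_iff in Ht1 as (s & <- & _).
    apply in_flat_map in Ht2 as (v' & Hv' & Ht). apply in_map_iff in Ht as (s' & Heq & _).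
    inversion Heq; subst. contradiction.
Qed.

Lemma claws_length n : (6 * length (claws n) = n * (n - 1) * (n - 2) * (n - 3))%nat.
Proof.
  assert (Hgen : forall L, (forall v, In v L -> (v < n)%nat) ->
    (6 * length (flat_map (fun v => map (cons v) (choose 3 (others n v))) L)
     = length L * ((n - 1) * (n - 2) * (n - 3)))%nat).
  { induction L as [|v L IH]; intros Hb; simpl; [lia|].
    rewrite length_app, length_map.
    pose proof (choose_length 3 (others n v)) as H. rewrite others_length in H by (apply Hb; left; auto).
    specialize (IH (fun w Hw => Hb w (or_intror Hw))). simpl in H.
    replace (n - 1 - 1)%nat with (n - 2)%nat in H by lia. replace (n - 2 - 1)%nat with (n - 3)%nat in H by lia.
    nia. }
  unfold claws. rewrite Hgen, length_seq by (intros v Hv; apply in_seq in Hv; lia). lia.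
Qed.

(** * The lower bound *)

Fixpoint tuples (k n : nat) : list (list nat) :=
  match k with
  | O => [[]]
  | S k' => flat_map (fun t => map (fun x => x :: t) (seq 0 n)) (tuples k' n)
  end.

Lemma tuples_length k n : length (tuples k n) = (n ^ k)%nat.
Proof.
  induction k as [|k IH]; simpl; auto.
  rewrite <- IH. clear IH. induction (tuples k n) as [|t l IH]; simpl; auto.
  rewrite length_app, length_map, length_seq, IH. lia.
Qed.

Lemma in_tuples k n t : length t = k -> (forall x, In x t -> (x < n)%nat) -> In t (tuples k n).
Proof.
  induction k as [|k IH] in t |- *; intros Hl Hb; destruct t as [|x t]; simpl in *; try lia; auto.
  apply in_flat_map. exists t. split; [apply IH; auto; lia|].
  apply in_map_iff. exists x; split; auto. apply in_seq. specialize (Hb x (or_introl eq_refl)); lia.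
Qed.

Lemma in_tuples_inv k n t : In t (tuples k n) -> length t = k /\ (forall x, In x t -> (x < n)%nat).
Proof.
  induction k as [|k IH] in t |- *; intros Ht; simpl in Ht.
  - destruct Ht as [<-|[]]; simpl; split; auto; intros x [].
  - apply in_flat_map in Ht as (s & Hs & Ht). apply in_map_iff in Ht as (x & <- & Hx).
    apply in_seq in Hx. destruct (IH s Hs) as [A B]. simpl; split; [lia|]. intros y [<-|Hy]; auto; lia.
Qed.

Lemma prob_some_copy_le n p k m (F : list nat -> list (nat * nat)) (Q : list (nat * nat) -> Prop) :
  0 <= p <= 1 ->
  (forall S, incl S (pairs n) -> Q S -> exists t, In t (tuples k n) /\ NoDup t /\ incl (F t) S) ->
  (forall t, In t (tuples k n) -> NoDup t -> NoDup (F t) /\ incl (F t) (pairs n) /\ length (F t) = m) ->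
  prob p (pairs n) Q <= INR (n ^ k) * p ^ m.
Proof.
  intros Hp Hcover HF.
  eapply Rle_trans.
  { apply (prob_le_in p (pairs n) Q (fun S => exists t, In t (tuples k n) /\ (NoDup t /\ incl (F t) S))); auto. }
  eapply Rle_trans; [apply (union_bound p (pairs n) (fun t S => NoDup t /\ incl (F t) S)); auto|].
  rewrite <- tuples_length, <- rsum_const. apply rsum_le. intros t Ht.
  rewrite prob_const_and. destruct (excluded_middle_informative (NoDup t)) as [h|h].
  - destruct (HF t Ht h) as (Hnd & Hin & Hlen). rewrite prob_edges, Hlen; auto; lra.
  - apply pow_le; lra.
Qed.

Ltac edges_nodup :=
  repeat constructor; simpl; intros Hin;
  repeat (destruct Hin as [Hin|Hin]; [apply edge_inj in Hin; lia|]); destruct Hin.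

Ltac nodup_inv H := repeat rewrite NoDup_cons_iff in H; simpl in H.

Ltac bounds_from_adj HS :=
  repeat match goal with
  | H : adj _ ?a ?b |- _ =>
      lazymatch goal with
      | _ : (a < _)%nat, _ : (b < _)%nat |- _ => fail
      | _ => pose proof (adj_bounds _ _ a b HS H) as (? & ? & ?)
      end
  end.

(* The two obligations of [prob_some_copy_le] for an explicit edge pattern. *)
Ltac copy_cover HS :=
  bounds_from_adj HS; split;
  [apply in_tuples; [reflexivity | intros x Hx; simpl in Hx; intuition (subst; lia)]
  | split; [assumption | let f := fresh in let Hf := fresh in intros f Hf; simpl in Hf;
     repeat (destruct Hf as [Hf|Hf]; [subst f; eapply adj_edge; eauto|]); destruct Hf]].

Ltac copy_shape F :=
  let Ht := fresh in let Hd := fresh in let Hl := fresh in let Hb := fresh in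
  intros ? Ht Hd; destruct (in_tuples_inv _ _ _ Ht) as [Hl Hb];
  repeat (match goal with t : list nat |- _ => destruct t as [|? t]; simpl in Hl; try lia end);
  nodup_inv Hd; simpl in Hb; unfold F;
  split; [edges_nodup | split; [|reflexivity]];
  let e := fresh in let He := fresh in intros e He; simpl in He;
  repeat (destruct He as [He|He]; [subst e; apply edge_in_pairs; [lia | apply Hb; tauto ..]|]);
  destruct He.

Definition triangle_edges (t : list nat) :=
  match t with [a; b; c] => [edge a b; edge b c; edge c a] | _ => [] end.
Definition cycle4_edges (t : list nat) :=
  match t with [a; b; c; d] => [edge a b; edge b c; edge c d; edge d a] | _ => [] end.
Definition path5_edges (t : list nat) :=
  match t with [a; b; c; d; e] => [edge a b; edge b c; edge c d; edge d e] | _ => [] end.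

Lemma prob_triangle_le n p : 0 <= p <= 1 ->
  prob p (pairs n) (fun S => ~ no_triangle S) <= INR (n ^ 3) * p ^ 3.
Proof.
  intros Hp. apply (prob_some_copy_le n p 3 3 triangle_edges); auto; [|copy_shape triangle_edges].
  intros S HS H. apply NNPP; intros Hn; apply H. intros a b c Hd H1 H2 H3. apply Hn.
  exists [a; b; c]. copy_cover HS.
Qed.

Lemma prob_C4_le n p : 0 <= p <= 1 ->
  prob p (pairs n) (fun S => ~ no_C4 S) <= INR (n ^ 4) * p ^ 4.
Proof.
  intros Hp. apply (prob_some_copy_le n p 4 4 cycle4_edges); auto; [|copy_shape cycle4_edges].
  intros S HS H. apply NNPP; intros Hn; apply H. intros a b c d Hd H1 H2 H3 H4. apply Hn.
  exists [a; b; c; d]. copy_cover HS.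
Qed.

Lemma prob_P5_le n p : 0 <= p <= 1 ->
  prob p (pairs n) (fun S => ~ no_P5 S) <= INR (n ^ 5) * p ^ 4.
Proof.
  intros Hp. apply (prob_some_copy_le n p 5 4 path5_edges); auto; [|copy_shape path5_edges].
  intros S HS H. apply NNPP; intros Hn; apply H. intros a b c d e Hd H1 H2 H3 H4. apply Hn.
  exists [a; b; c; d; e]. copy_cover HS.
Qed.

Definition claw_edges (t : list nat) :=
  match t with [v; x; y; z] => [edge v x; edge v y; edge v z] | _ => [] end.

Lemma claw_edges_spec n t : In t (claws n) ->
  NoDup (claw_edges t) /\ incl (claw_edges t) (pairs n) /\ length (claw_edges t) = 3%nat.
Proof.
  intros Ht. apply in_claws in Ht as (v & x & y & z & -> & Hv & Hxyz & Hz & Hx & Hy & Hz').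
  unfold claw_edges. split; [edges_nodup | split; [|reflexivity]].
  intros e He; simpl in He. repeat (destruct He as [He|He]; [subst e; apply edge_in_pairs; lia|]). destruct He.
Qed.

Lemma sort3 a b c : a <> b -> a <> c -> b <> c ->
  exists x y z, (x < y < z)%nat /\ forall t, t = x \/ t = y \/ t = z -> t = a \/ t = b \/ t = c.
Proof.
  intros. destruct (Nat.lt_total a b) as [?|[?|?]], (Nat.lt_total a c) as [?|[?|?]],
    (Nat.lt_total b c) as [?|[?|?]]; try lia.
  all: first [ exists a, b, c; split; [lia | intros; lia] | exists a, c, b; split; [lia | intros; lia]
             | exists b, a, c; split; [lia | intros; lia] | exists b, c, a; split; [lia | intros; lia]
             | exists c, a, b; split; [lia | intros; lia] | exists c, b, a; split; [lia | intros; lia] ].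
Qed.

Lemma claw_cover n S : incl S (pairs n) -> ~ no_claw S ->
  exists t, In t (claws n) /\ incl (claw_edges t) S.
Proof.
  intros HS H. apply NNPP; intros Hn; apply H. intros v a b c Hd H1 H2 H3. apply Hn.
  nodup_inv Hd. assert (a <> b /\ a <> c /\ b <> c) as (Hab & Hac & Hbc) by lia.
  destruct (sort3 a b c Hab Hac Hbc) as (x & y & z & Hxyz & Hperm).
  assert (Hadj : forall t, t = x \/ t = y \/ t = z -> adj S v t)
    by (intros t Ht; destruct (Hperm t Ht) as [-> | [-> | ->]]; auto).
  pose proof (Hadj x ltac:(auto)) as Ax. pose proof (Hadj y ltac:(auto)) as Ay.
  pose proof (Hadj z ltac:(auto)) as Az.
  bounds_from_adj HS.
  exists [v; x; y; z]. split.
  - apply in_claws. exists v, x, y, z. repeat split; lia.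
  - intros e He; simpl in He. repeat (destruct He as [He|He]; [subst e; eapply adj_edge; eauto|]). destruct He.
Qed.

Lemma no_claw_down_closed : down_closed no_claw.
Proof. intros S T H HT v a b c Hd H1 H2 H3. apply (HT v a b c Hd); eapply adj_incl; eauto. Qed.

Lemma no_short_cycle_P5_down_closed : down_closed (fun S => no_triangle S /\ no_C4 S /\ no_P5 S).
Proof.
  intros S T H (h1 & h2 & h3). repeat split.
  - intros a b c Hd H1 H2 H3; apply (h1 a b c Hd); eapply adj_incl; eauto.
  - intros a b c d Hd H1 H2 H3 H4; apply (h2 a b c d Hd); eapply adj_incl; eauto.
  - intros a b c d e Hd H1 H2 H3 H4; apply (h3 a b c d e Hd); eapply adj_incl; eauto.
Qed.

Lemma prob_no_claw_ge n p : 0 <= p <= 1 ->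
  (1 - p ^ 3) ^ length (claws n) <= prob p (pairs n) no_claw.
Proof.
  intros Hp.
  eapply Rle_trans; [|apply (prob_le_in p (pairs n) (fun S => forall t, In t (claws n) -> ~ incl (claw_edges t) S))];
    auto.
  - eapply Rle_trans; [|apply harris_prod; auto].
    + rewrite <- rprod_const. apply Req_le.
      assert (Hgen : forall L, incl L (claws n) ->
        rprod (fun _ => 1 - p ^ 3) L = rprod (fun t => 1 - prob p (pairs n) (fun S => incl (claw_edges t) S)) L).
      { induction L as [|t L IH]; intros HL; cbn [rprod]; auto. rewrite IH by (intros u Hu; apply HL; right; auto).
        destruct (claw_edges_spec n t (HL t (or_introl eq_refl))) as (A & B & C). rewrite prob_edges, C; auto. }
      apply Hgen, incl_refl.
    + intros t S T HST HS. eapply incl_tran; eauto.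
  - intros S HS H. apply NNPP; intros Hn. destruct (claw_cover n S HS Hn) as (t & Ht & Hi). apply (H t Ht Hi).
Qed.

Lemma prob_no_short_cycle_P5_ge n p : 0 <= p <= 1 ->
  1 - INR (n ^ 3) * p ^ 3 - INR (n ^ 4) * p ^ 4 - INR (n ^ 5) * p ^ 4
  <= prob p (pairs n) (fun S => no_triangle S /\ no_C4 S /\ no_P5 S).
Proof.
  intros Hp. pose proof (prob_triangle_le n p Hp). pose proof (prob_C4_le n p Hp). pose proof (prob_P5_le n p Hp).
  pose proof (prob_compl p (pairs n) (fun S => no_triangle S /\ no_C4 S /\ no_P5 S)).
  assert (prob p (pairs n) (fun S => ~ (no_triangle S /\ no_C4 S /\ no_P5 S)) <=
    prob p (pairs n) (fun S => ~ no_triangle S) + prob p (pairs n) (fun S => ~ no_C4 S)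
    + prob p (pairs n) (fun S => ~ no_P5 S)).
  { eapply Rle_trans; [|apply Rplus_le_compat_r, prob_or_le; auto].
    eapply Rle_trans; [|apply prob_or_le; auto].
    apply prob_le; auto. intros S h. apply NNPP; intros h'. apply h. repeat split; apply NNPP; tauto. }
  lra.
Qed.

(* Realizability contains the intersection of two down-closed events. *)
Lemma prob_realizable_ge n p : 0 <= p <= 1 ->
  (1 - p ^ 3) ^ length (claws n) * (1 - INR (n ^ 3) * p ^ 3 - INR (n ^ 4) * p ^ 4 - INR (n ^ 5) * p ^ 4)
  <= prob p (pairs n) (realizable_R1 n).
Proof.
  intros Hp.
  assert (Hp3 : 0 <= (1 - p ^ 3) ^ length (claws n)).
  { apply pow_le. assert (p ^ 3 <= 1) by (rewrite <- (pow1 3); apply pow_incr; lra). lra. }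
  destruct (Rle_dec 0 (1 - INR (n ^ 3) * p ^ 3 - INR (n ^ 4) * p ^ 4 - INR (n ^ 5) * p ^ 4)) as [Hpos|Hneg].
  - eapply Rle_trans; [apply Rmult_le_compat; [auto | auto | apply prob_no_claw_ge, Hp
                                            | apply prob_no_short_cycle_P5_ge, Hp]|].
    eapply Rle_trans; [apply harris; auto; [apply no_claw_down_closed | apply no_short_cycle_P5_down_closed]|].
    apply prob_le_in; auto. intros S HS (h1 & h2 & h3 & h4). apply short_path_forest_realizable; auto.
    repeat split; auto. intros a b Hab; eapply adj_bounds; eauto.
  - apply Rle_trans with 0; [|apply prob_bounds; auto]. apply Rnot_le_lt in Hneg. nra.
Qed.

(** * The upper bound *)

Lemma realizable_no_claw n S : incl S (pairs n) -> realizable_R1 n S -> no_claw S.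
Proof.
  intros HS (f & Hinj & He) v a b c Hd H1 H2 H3. nodup_inv Hd.
  assert (Hnb : forall t, adj S v t -> (t < n)%nat /\ (v < n)%nat /\ (f t = f v - 1 \/ f t = f v + 1)).
  { intros t Ht. destruct (adj_bounds S n v t HS Ht) as (_ & Hv & Htn). repeat split; auto.
    assert (Rabs (f v - f t) = 1) as Habs.
    { destruct Ht as [h|h]; [apply (He _ h) | rewrite Rabs_minus_sym; apply (He _ h)]. }
    unfold Rabs in Habs. destruct (Rcase_abs (f v - f t)); [right | left]; lra. }
  destruct (Hnb a H1) as (Ha & Hv & Fa), (Hnb b H2) as (Hb & _ & Fb), (Hnb c H3) as (Hc & _ & Fc).
  assert (Hne : forall x y, (x < n)%nat -> (y < n)%nat -> x <> y -> f x <> f y)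
    by (intros x y Hx Hy Hxy Hf; apply Hxy, Hinj; auto).
  pose proof (Hne a b Ha Hb ltac:(lia)). pose proof (Hne a c Ha Hc ltac:(lia)).
  pose proof (Hne b c Hb Hc ltac:(lia)). lra.
Qed.

Lemma prob_realizable_le_janson n p : 0 <= p <= 1 ->
  prob p (pairs n) (realizable_R1 n) <= exp (janson_exponent p (pairs n) claw_edges (claws n)).
Proof.
  intros Hp. eapply Rle_trans; [|apply janson; auto].
  apply prob_le_in; auto. intros S HS HR t Ht Hi.
  destruct (proj1 (in_claws n t) Ht) as (v & x & y & z & -> & Hv & Hxyz & Hz & Hx & Hy & Hz').
  apply (realizable_no_claw n S HS HR v x y z); [nodup_by_lia | apply edge_adj, Hi; simpl; auto ..].
Qed.

(* Bounding the overlap term of Janson's inequality.  For a claw [i] with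
   vertex set [V], a claw [j = [w; x; y; z]] sharing an edge with [i] has its
   centre [w] in [V], and [i] and [j] together have at least four edges, and
   three plus the number of leaves of [j] outside [V] when there are such
   leaves. *)
Definition indicator (V : list nat) (x : nat) : R := if in_dec Nat.eq_dec x V then 1 else 0.
Definition weight (V : list nat) (p : R) (x : nat) : R := if in_dec Nat.eq_dec x V then 1 else p.
Definition outside (V : list nat) (L : list nat) :=
  filter (fun t => if in_dec Nat.eq_dec t V then false else true) L.

Definition overlap_bound (V : list nat) (p : R) (j : list nat) : R :=
  match j with
  | [w; x; y; z] => indicator V w * (p ^ 4 * rprod (indicator V) [x; y; z]
                     + p ^ 3 * (rprod (weight V p) [x; y; z] - rprod (indicator V) [x; y; z]))
  | _ => 0
  end.

Lemma rprod_weight V p L : rprod (weight V p) L = p ^ length (outside V L).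
Proof.
  induction L as [|t L IH]; [reflexivity|]. unfold outside in *. cbn [rprod filter]. unfold weight at 1.
  destruct (in_dec Nat.eq_dec t V); cbn [length]; rewrite IH; [ring|]. rewrite <- tech_pow_Rmult; ring.
Qed.

Lemma rprod_indicator V L : rprod (indicator V) L = if outside V L then 1 else 0.
Proof.
  induction L as [|t L IH]; [reflexivity|]. unfold outside in *. cbn [rprod filter]. unfold indicator at 1.
  destruct (in_dec Nat.eq_dec t V); rewrite IH; [destruct (filter _ L)|]; ring.
Qed.

Lemma in_outside V L t : In t (outside V L) <-> In t L /\ ~ In t V.
Proof. unfold outside. rewrite filter_In. destruct (in_dec Nat.eq_dec t V); split; intros [? ?]; try discriminate; tauto. Qed.

Lemma overlap_bound_nonneg V p j : 0 <= p <= 1 -> 0 <= overlap_bound V p j.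
Proof.
  intros Hp. destruct j as [|w [|x [|y [|z [|]]]]]; cbn [overlap_bound]; try lra.
  assert (0 <= indicator V w) by (unfold indicator; destruct in_dec; lra).
  apply Rmult_le_pos; auto. rewrite rprod_weight, rprod_indicator.
  destruct (outside V [x; y; z]) as [|o l]; cbn [length pow].
  - assert (0 <= p ^ 4) by (apply pow_le; lra). lra.
  - assert (0 <= p ^ 3) by (apply pow_le; lra). assert (0 <= p ^ length l) by (apply pow_le; lra).
    rewrite Rminus_0_r. apply Rplus_le_le_0_compat; [lra|]. apply Rmult_le_pos; auto. nra.
Qed.

Lemma prob_claw_and_edges_le n p i H : 0 <= p <= 1 -> In i (claws n) ->
  NoDup (claw_edges i ++ H) -> incl (claw_edges i ++ H) (pairs n) ->
  forall G, incl H G ->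
  prob p (pairs n) (fun S => incl (claw_edges i) S /\ incl G S) <= p ^ (3 + length H).
Proof.
  intros Hp Hi Hnd Hpairs G HG. destruct (claw_edges_spec n i Hi) as (_ & _ & Hlen).
  rewrite <- Hlen, <- length_app, <- (prob_edges n p (claw_edges i ++ H)); auto.
  apply prob_le; auto. intros S [h1 h2] e He. apply in_app_or in He as [He|He]; auto.
Qed.

Section OverlappingClaws.
Variables (n : nat) (p : R) (v a b c w x y z : nat).
Hypothesis Hp : 0 <= p <= 1.
Let i := [v; a; b; c].
Let j := [w; x; y; z].
Hypotheses (Hi : In i (claws n)) (Hj : In j (claws n)) (Hij : i <> j).
Hypothesis Hshare : overlap claw_edges i j.

Lemma overlap_centre_in : In w i.
Proof.
  destruct Hshare as (e & He1 & He2). simpl in He1, He2.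
  assert (Hend : forall t, edge w t = edge v a \/ edge w t = edge v b \/ edge w t = edge v c -> In w i)
    by (intros t [h|[h|h]]; apply edge_inj in h; simpl; destruct h as [[-> _]|[-> _]]; tauto).
  destruct He2 as [<-|[<-|[<-|[]]]]; [apply (Hend x) | apply (Hend y) | apply (Hend z)];
    destruct He1 as [h|[h|[h|[]]]]; rewrite <- h; tauto.
Qed.

Lemma claw_i_facts : (v < n)%nat /\ (a < n)%nat /\ (b < n)%nat /\ (c < n)%nat /\ NoDup i.
Proof.
  destruct (proj1 (in_claws n i) Hi) as (v' & a' & b' & c' & Heq & ?); inversion Heq; subst.
  repeat split; try lia. nodup_by_lia.
Qed.

Lemma claw_j_facts : (w < n)%nat /\ (x < y < z)%nat /\ (z < n)%nat /\ w <> x /\ w <> y /\ w <> z.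
Proof.
  destruct (proj1 (in_claws n j) Hj) as (w' & x' & y' & z' & Heq & ?); inversion Heq; subst. lia.
Qed.

Lemma edge_of_claw_i s t : In (edge s t) (claw_edges i) -> In s i /\ In t i.
Proof.
  intros H. simpl in H. repeat (destruct H as [H|H]; [apply edge_inj in H; simpl; intuition congruence|]).
  destruct H.
Qed.

Lemma prob_overlapping_claws_some_outside o O : outside i [x; y; z] = o :: O ->
  prob p (pairs n) (fun S => incl (claw_edges i) S /\ incl (claw_edges j) S) <= p ^ (3 + length (o :: O)).
Proof.
  intros HO. rewrite <- HO, <- (length_map (edge w)).
  destruct (claw_edges_spec n i Hi) as (Hnd & Hpairs & _).
  pose proof claw_j_facts as (Hw & Hxyz & Hz & Hwx & Hwy & Hwz).
  assert (Hout : forall t, In t (outside i [x; y; z]) -> (t = x \/ t = y \/ t = z) /\ ~ In t i)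
    by (intros t Ht; apply in_outside in Ht as [Ht ?]; simpl in Ht; intuition).
  apply prob_claw_and_edges_le; auto.
  - apply NoDup_app; auto.
    + apply NoDup_map_NoDup_ForallPairs.
      * intros t1 t2 H1 H2 He. apply edge_inj in He. destruct (Hout t1 H1), (Hout t2 H2). lia.
      * apply NoDup_filter. nodup_by_lia.
    + intros e He1 He2. apply in_map_iff in He2 as (t & <- & Ht).
      destruct (Hout t Ht) as [_ Hti]. apply Hti, (edge_of_claw_i w t He1).
  - intros e He. apply in_app_or in He as [He|He]; auto.
    apply in_map_iff in He as (t & <- & Ht). destruct (Hout t Ht) as [? _]. apply edge_in_pairs; lia.
  - intros e He. apply in_map_iff in He as (t & <- & Ht). destruct (Hout t Ht) as [Ht' _].
    simpl. intuition (subst; auto).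
Qed.

Lemma prob_overlapping_claws_none_outside : outside i [x; y; z] = [] ->
  prob p (pairs n) (fun S => incl (claw_edges i) S /\ incl (claw_edges j) S) <= p ^ 4.
Proof.
  intros HO. destruct (claw_edges_spec n i Hi) as (Hnd & Hpairs & _).
  pose proof claw_j_facts as (Hw & Hxyz & Hz & Hwx & Hwy & Hwz).
  pose proof claw_i_facts as (Hv & Ha & Hb & Hc & Hndi).
  assert (Hin : forall t, t = x \/ t = y \/ t = z -> In t i).
  { intros t Ht. apply NNPP; intros Hn. assert (In t (outside i [x; y; z])) as H
      by (apply in_outside; split; [destruct Ht as [-> | [-> | ->]]; simpl; tauto | auto]). rewrite HO in H; destruct H. }
  assert (Hwv : w <> v).
  { intros ->. apply Hij. unfold i, j.
    destruct (proj1 (in_claws n i) Hi) as (v' & a' & b' & c' & Heq & ?); inversion Heq; subst.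
    pose proof (Hin x ltac:(auto)) as Hx. pose proof (Hin y ltac:(auto)) as Hy. pose proof (Hin z ltac:(auto)) as Hz'.
    simpl in Hx, Hy, Hz'. repeat f_equal; lia. }
  set (t := if Nat.eq_dec x v then y else x).
  assert (Ht : (t = x \/ t = y) /\ t <> v) by (unfold t; destruct (Nat.eq_dec x v); lia).
  replace 4%nat with (3 + length [edge w t])%nat by reflexivity.
  apply prob_claw_and_edges_le; auto.
  - apply NoDup_app; auto; [repeat constructor; intros []|].
    intros e He [<-|[]]. simpl in He. repeat (destruct He as [He|He]; [apply edge_inj in He; lia|]). destruct He.
  - intros e He. apply in_app_or in He as [He|[<-|[]]]; auto. apply edge_in_pairs; lia.
  - intros e [<-|[]]. simpl. destruct Ht as [[-> | ->] _]; auto.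
Qed.

Lemma prob_overlapping_claws_le :
  prob p (pairs n) (fun S => incl (claw_edges i) S /\ incl (claw_edges j) S) <= overlap_bound i p j.
Proof.
  unfold j. cbn [overlap_bound]. fold j. rewrite rprod_weight, rprod_indicator.
  replace (indicator i w) with 1 by (unfold indicator; destruct in_dec; [auto | contradiction (n0 overlap_centre_in)]).
  destruct (outside i [x; y; z]) as [|o O] eqn:HO.
  - pose proof (prob_overlapping_claws_none_outside HO). cbn [length]. rewrite pow_O. lra.
  - pose proof (prob_overlapping_claws_some_outside o O HO). rewrite pow_add in *. lra.
Qed.

End OverlappingClaws.

Lemma rsum_tuples_S (f : list nat -> R) k n :
  rsum f (tuples (S k) n) = rsum (fun t => rsum (fun x => f (x :: t)) (seq 0 n)) (tuples k n).
Proof. simpl. rewrite rsum_flat_map. apply rsum_ext; intros t _. rewrite rsum_map; auto. Qed.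

Lemma rsum_rprod_tuples (g : nat -> R) k n : rsum (rprod g) (tuples k n) = rsum g (seq 0 n) ^ k.
Proof.
  induction k as [|k IH]; [simpl; ring|]. rewrite rsum_tuples_S, <- tech_pow_Rmult, <- IH, <- rsum_scal.
  apply rsum_ext; intros t _. cbn [rprod].
  rewrite (rsum_ext _ (fun x => rprod g t * g x)) by (intros; ring). rewrite rsum_scal. ring.
Qed.

Lemma rsum_indicator V L : NoDup V -> NoDup L -> incl V L -> rsum (indicator V) L = INR (length V).
Proof.
  intros HV HL HVL.
  set (keep := fun t : nat => if in_dec Nat.eq_dec t V then true else false).
  assert (Hcount : forall L, rsum (indicator V) L = INR (length (filter keep L))).
  { induction L0 as [|t L0 IH]; [reflexivity|]. cbn [rsum filter]. unfold indicator at 1, keep at 1.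
    destruct (in_dec Nat.eq_dec t V); cbn [length]; rewrite IH; [rewrite S_INR|]; ring. }
  rewrite Hcount. f_equal. apply Nat.le_antisymm.
  - apply NoDup_incl_length; [apply NoDup_filter; auto|].
    intros t Ht. apply filter_In in Ht as [_ Ht]. unfold keep in Ht. destruct in_dec; [auto | discriminate].
  - apply NoDup_incl_length; auto. intros t Ht. apply filter_In. split; auto. unfold keep; destruct in_dec; tauto.
Qed.

Lemma rsum_weight V p L : rsum (weight V p) L = rsum (indicator V) L + p * (INR (length L) - rsum (indicator V) L).
Proof.
  rewrite (rsum_ext _ (fun x => (1 - p) * indicator V x + p * 1)).
  - rewrite rsum_plus, !rsum_scal, rsum_const. ring.
  - intros x _. unfold weight, indicator. destruct in_dec; ring.
Qed.

Lemma rsum_overlap_bound V p n :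
  rsum (overlap_bound V p) (tuples 4 n) =
  rsum (indicator V) (seq 0 n) * ((p ^ 4 - p ^ 3) * rsum (indicator V) (seq 0 n) ^ 3
                                  + p ^ 3 * rsum (weight V p) (seq 0 n) ^ 3).
Proof.
  set (A := rsum (indicator V) (seq 0 n)).
  set (C := fun t => (p ^ 4 - p ^ 3) * rprod (indicator V) t + p ^ 3 * rprod (weight V p) t).
  transitivity (rsum (fun t => A * C t) (tuples 3 n)).
  2:{ rewrite rsum_scal. unfold C. rewrite rsum_plus, !rsum_scal, !rsum_rprod_tuples. reflexivity. }
  rewrite rsum_tuples_S. apply rsum_ext; intros t Ht. destruct (in_tuples_inv 3 n t Ht) as [Hl _].
  destruct t as [|x [|y [|z [|]]]]; try discriminate.
  rewrite (rsum_ext _ (fun w => C [x; y; z] * indicator V w)) by (intros; unfold C; cbn [overlap_bound]; ring).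
  rewrite rsum_scal. unfold A. ring.
Qed.

Definition claw_overlap_sum (n : nat) (p : R) := 4 * ((p ^ 4 - p ^ 3) * 4 ^ 3 + p ^ 3 * (4 + p * (INR n - 4)) ^ 3).

Lemma claws_in_tuples n t : In t (claws n) -> In t (tuples 4 n).
Proof.
  intros Ht. destruct (proj1 (in_claws n t) Ht) as (v & x & y & z & -> & Hv & Hxyz & Hz & _).
  apply in_tuples; auto. intros u Hu; simpl in Hu; lia.
Qed.

Lemma rsum_overlap_bound_claw n p i : In i (claws n) ->
  rsum (overlap_bound i p) (tuples 4 n) = claw_overlap_sum n p.
Proof.
  intros Hi. destruct (proj1 (in_claws n i) Hi) as (v & x & y & z & -> & ?).
  rewrite rsum_overlap_bound, rsum_weight, length_seq.
  rewrite rsum_indicator; [unfold claw_overlap_sum; simpl; ring | nodup_by_lia | apply seq_NoDup |].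
  intros u Hu; apply in_seq; simpl in Hu; lia.
Qed.

Lemma janson_delta_claws_le n p i rest : 0 <= p <= 1 -> In i (claws n) -> incl rest (claws n) ->
  NoDup (i :: rest) -> janson_delta p (pairs n) claw_edges i rest <= claw_overlap_sum n p.
Proof.
  intros Hp Hi Hr ND. apply NoDup_cons_iff in ND as [Hnotin ND].
  rewrite <- (rsum_overlap_bound_claw n p i Hi).
  eapply Rle_trans; [|apply rsum_incl; [exact ND | intros u Hu; apply claws_in_tuples, Hr, Hu
                                                  | intros u _; apply overlap_bound_nonneg; auto]].
  apply rsum_le. intros u Hu.
  destruct (excluded_middle_informative (overlap claw_edges i u)) as [Hov|].
  - destruct (proj1 (in_claws n i) Hi) as (v & a & b & c & -> & _).
    destruct (proj1 (in_claws n u) (Hr u Hu)) as (w & x & y & z & -> & _).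
    apply prob_overlapping_claws_le; auto. intros Heq; rewrite Heq in Hnotin; contradiction.
  - apply overlap_bound_nonneg; auto.
Qed.

Lemma janson_exponent_claws_le n p L : 0 <= p <= 1 -> NoDup L -> incl L (claws n) ->
  janson_exponent p (pairs n) claw_edges L <= INR (length L) * (claw_overlap_sum n p - p ^ 3).
Proof.
  intros Hp. induction L as [|t L IH]; intros ND HL; cbn [janson_exponent]; [simpl; lra|].
  assert (Ht : In t (claws n)) by (apply HL; left; auto).
  destruct (claw_edges_spec n t Ht) as (A & B & C). rewrite prob_edges, C by auto.
  pose proof (janson_delta_claws_le n p t L Hp Ht (fun u Hu => HL u (or_intror Hu)) ND).
  apply NoDup_cons_iff in ND as [_ ND].
  pose proof (IH ND (fun u Hu => HL u (or_intror Hu))).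
  rewrite length_cons, S_INR. lra.
Qed.

(** * Asymptotics *)

Lemma exp_le x y : x <= y -> exp x <= exp y.
Proof. intros [h|h]; [left; apply exp_increasing; auto | rewrite h; lra]. Qed.

Lemma ln2_pos : 0 < ln 2.
Proof. pose proof ln_lt_2. lra. Qed.

Lemma exp_INR_mult y N : exp (INR N * y) = exp y ^ N.
Proof.
  induction N as [|N IH]; [simpl; rewrite Rmult_0_l, exp_0; auto|].
  rewrite S_INR, Rmult_plus_distr_r, exp_plus, IH, Rmult_1_l. simpl. ring.
Qed.

(* From [exp y >= 1 + y] at [y = x / (1 - x)], and [x / (1 - x) <= x + 2 x^2] for [x <= 1/2]. *)
Lemma one_minus_ge_exp x : 0 <= x <= 1 / 2 -> exp (- (x + 2 * x ^ 2)) <= 1 - x.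
Proof.
  intros Hx. pose proof (exp_ineq1_le (x / (1 - x))) as H.
  replace (1 + x / (1 - x)) with (/ (1 - x)) in H by (field; lra).
  apply Rle_trans with (exp (- (x / (1 - x)))).
  - apply exp_le. apply Ropp_le_contravar. apply (Rmult_le_reg_r (1 - x)); [lra|].
    unfold Rdiv. rewrite Rmult_assoc, Rinv_l by lra. nra.
  - rewrite exp_Ropp. replace (1 - x) with (/ / (1 - x)) at 2 by (field; lra).
    apply Rinv_le_contravar; auto. apply Rinv_0_lt_compat; lra.
Qed.

Lemma pow_one_minus_ge_exp x N : 0 <= x <= 1 / 2 -> exp (- (INR N * (x + 2 * x ^ 2))) <= (1 - x) ^ N.
Proof.
  intros Hx. replace (- (INR N * (x + 2 * x ^ 2))) with (INR N * (- (x + 2 * x ^ 2))) by ring.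
  rewrite exp_INR_mult. apply pow_incr. split; [left; apply exp_pos | apply one_minus_ge_exp; auto].
Qed.

Lemma div_nonneg a b : 0 <= a -> 0 < b -> 0 <= a / b.
Proof. intros Ha Hb. apply Rmult_le_pos; [auto | left; apply Rinv_0_lt_compat; auto]. Qed.

Lemma div_le_div_pow K T k : 0 <= K -> 1 <= T -> (1 <= k)%nat -> K / T ^ k <= K / T.
Proof.
  intros HK HT Hk. unfold Rdiv. apply Rmult_le_compat_l; auto.
  apply Rinv_le_contravar; [lra|]. replace T with (T ^ 1) at 1 by ring. apply Rle_pow; auto.
Qed.

Lemma div_lt_of_lt K T d : 0 < d -> 0 < T -> K / d < T -> K / T < d.
Proof.
  intros Hd HT H. apply (Rmult_lt_reg_r T); auto. unfold Rdiv. rewrite Rmult_assoc, Rinv_l, Rmult_1_r by lra.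
  apply (Rmult_lt_compat_r d) in H; auto. unfold Rdiv in H. rewrite Rmult_assoc, Rinv_l in H by lra. lra.
Qed.

Lemma eventually_gt_half lam K1 K2 : lam < ln 2 -> 0 <= K1 -> 0 <= K2 ->
  exists T0, 1 <= T0 /\ forall T, T0 <= T -> 1 / 2 < exp (- (lam + K1 / T)) * (1 - K2 / T).
Proof.
  intros Hlam HK1 HK2. set (d := (ln 2 - lam) / 2). assert (Hd : 0 < d) by (unfold d; lra).
  set (e := 1 - exp (- d)).
  assert (He : 0 < e) by (unfold e; pose proof (exp_increasing (- d) 0 ltac:(lra)); rewrite exp_0 in *; lra).
  exists (1 + K1 / d + K2 / e). split.
  - assert (0 <= K1 / d) by (apply div_nonneg; lra). assert (0 <= K2 / e) by (apply div_nonneg; lra). lra.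
  - intros T HT. assert (0 <= K1 / d) by (apply div_nonneg; lra).
    assert (0 <= K2 / e) by (apply div_nonneg; lra).
    assert (H1 : K1 / T < d) by (apply div_lt_of_lt; lra).
    assert (H2 : K2 / T < e) by (apply div_lt_of_lt; lra).
    assert (Hhalf : exp (- (lam + d)) * exp (- d) = 1 / 2).
    { rewrite <- exp_plus. replace (- (lam + d) + - d) with (- ln 2) by (unfold d; lra).
      rewrite exp_Ropp, exp_ln; lra. }
    pose proof (exp_pos (- (lam + d))). pose proof (exp_pos (- d)).
    assert (exp (- (lam + d)) < exp (- (lam + K1 / T))) by (apply exp_increasing; lra).
    unfold e in H2. nra.
Qed.

Lemma eventually_le_minus_ln2 lam C : ln 2 < lam -> 0 <= C ->
  exists T0, 1 <= T0 /\ forall T, T0 <= T -> - lam + C / T <= - ln 2.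
Proof.
  intros Hlam HC. exists (1 + C / (lam - ln 2)).
  assert (0 <= C / (lam - ln 2)) by (apply div_nonneg; lra). split; [lra|].
  intros T HT. assert (C / T < lam - ln 2) by (apply div_lt_of_lt; lra). lra.
Qed.

Lemma claws_count n : (4 <= n)%nat ->
  INR n ^ 4 - 6 * INR n ^ 3 <= 6 * INR (length (claws n)) <= INR n ^ 4.
Proof.
  intros Hn. pose proof (claws_length n) as H. apply (f_equal INR) in H.
  rewrite !mult_INR, !minus_INR in H by lia. replace (INR 6) with 6 in H by (simpl; ring).
  replace (INR 1) with 1 in H by (simpl; ring). replace (INR 2) with 2 in H by (simpl; ring).
  replace (INR 3) with 3 in H by (simpl; ring).
  assert (4 <= INR n) by (replace 4 with (INR 4) by (simpl; ring); apply le_INR; auto).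
  split; nra.
Qed.

Lemma at_least_4_of_cube n T : 4 <= T -> T ^ 3 = INR n -> (4 <= n)%nat.
Proof.
  intros HT Hn. apply INR_le. replace (INR 4) with 4 by (simpl; ring). rewrite <- Hn.
  apply Rle_trans with (T ^ 1); [simpl; lra | apply Rle_pow; lia || lra].
Qed.

Section LowerBound.
Variable a : R.
Hypotheses (Ha : 0 < a) (Hlam : a ^ 3 / 6 < ln 2).

Lemma lower_error_terms T : 1 <= T ->
  (T ^ 3) ^ 3 * (a / T ^ 4) ^ 3 + (T ^ 3) ^ 4 * (a / T ^ 4) ^ 4 + (T ^ 3) ^ 5 * (a / T ^ 4) ^ 4
  <= (a ^ 3 + 2 * a ^ 4) / T.
Proof.
  intros HT. replace ((T ^ 3) ^ 3 * (a / T ^ 4) ^ 3 + (T ^ 3) ^ 4 * (a / T ^ 4) ^ 4 + (T ^ 3) ^ 5 * (a / T ^ 4) ^ 4)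
    with (a ^ 3 / T ^ 3 + a ^ 4 / T ^ 4 + a ^ 4 / T) by (field; lra).
  pose proof (div_le_div_pow (a ^ 3) T 3 ltac:(nra) HT ltac:(lia)).
  pose proof (div_le_div_pow (a ^ 4) T 4 ltac:(nra) HT ltac:(lia)).
  unfold Rdiv in *. lra.
Qed.

Lemma lower_exponent T N : 1 <= T -> INR N <= (T ^ 3) ^ 4 / 6 ->
  INR N * ((a / T ^ 4) ^ 3 + 2 * ((a / T ^ 4) ^ 3) ^ 2) <= a ^ 3 / 6 + 2 * (a ^ 3 / 6) * a ^ 3 / T.
Proof.
  intros HT HN. set (x := (a / T ^ 4) ^ 3).
  assert (Hx : x = a ^ 3 / T ^ 12) by (unfold x; field; lra).
  assert (Hx0 : 0 <= x) by (rewrite Hx; apply div_nonneg; [nra | apply pow_lt; lra]).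
  assert (HNx : INR N * x <= a ^ 3 / 6).
  { rewrite Hx. replace (a ^ 3 / 6) with ((T ^ 3) ^ 4 / 6 * (a ^ 3 / T ^ 12)) by (field; lra).
    apply Rmult_le_compat_r; auto. rewrite <- Hx; auto. }
  assert (Hxa : x <= a ^ 3 / T) by (rewrite Hx; apply div_le_div_pow; [nra | lra | lia]).
  pose proof (pos_INR N).
  assert (INR N * x * x <= a ^ 3 / 6 * (a ^ 3 / T)) by (apply Rmult_le_compat; nra).
  unfold Rdiv in *. nra.
Qed.

Lemma lower_threshold_small T : 2 * a ^ 3 + a + 1 <= T ->
  0 <= a / T ^ 4 <= 1 /\ 0 <= (a / T ^ 4) ^ 3 <= 1 / 2.
Proof.
  intros HT. assert (Ha3 : 0 < a ^ 3) by (apply pow_lt; lra).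
  assert (Hsmall : forall K c, 0 < c -> c * K <= T -> K / T <= / c).
  { intros K c Hc HKT. apply (Rmult_le_reg_r (c * T)); [nra|].
    replace (K / T * (c * T)) with (c * K) by (field; lra). replace (/ c * (c * T)) with T by (field; lra). lra. }
  assert (Hp0 : 0 <= a / T ^ 4) by (apply div_nonneg; [lra | apply pow_lt; lra]).
  split; split; [auto | | apply pow_le; auto |].
  - eapply Rle_trans; [apply div_le_div_pow; lra || lia|]. replace 1 with (/ 1) by field. apply Hsmall; lra.
  - replace ((a / T ^ 4) ^ 3) with (a ^ 3 / T ^ 12) by (field; lra).
    eapply Rle_trans; [apply div_le_div_pow; lra || lia|]. replace (1 / 2) with (/ 2) by field. apply Hsmall; lra.
Qed.


Lemma pstar_set_lower_threshold :
  exists T0, 1 <= T0 /\ forall n T, T0 <= T -> T ^ 3 = INR n -> pstar_set n (a / T ^ 4).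
Proof.
  (* [K1 / T] bounds the correction [2 N x^2] of the exponent, and [K2 / T] the
     expected number of triangles, 4-cycles and 5-vertex paths. *)
  set (lam := a ^ 3 / 6). set (K1 := 2 * lam * a ^ 3). set (K2 := a ^ 3 + 2 * a ^ 4).
  assert (HK1 : 0 <= K1) by (unfold K1, lam; nra). assert (HK2 : 0 <= K2) by (unfold K2; nra).
  destruct (eventually_gt_half lam K1 K2 Hlam HK1 HK2) as (T0 & HT0 & Hev).
  assert (Ha3 : 0 < a ^ 3) by (apply pow_lt; lra).
  exists (T0 + 2 * a ^ 3 + a + 4). split; [lra|]. intros n T HT Hn.
  assert (HT1 : 1 <= T) by nra.
  assert (Hn4 := at_least_4_of_cube n T ltac:(lra) Hn).
  destruct (lower_threshold_small T ltac:(lra)) as [Hp Hx].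
  set (p := a / T ^ 4) in *. set (x := p ^ 3) in *.
  destruct (claws_count n Hn4) as [_ HN]. rewrite <- Hn in HN.
  pose proof (pow_one_minus_ge_exp x (length (claws n)) Hx) as Hpow.
  pose proof (lower_exponent T (length (claws n)) HT1 ltac:(lra)) as Hexp. fold p x in Hexp.
  pose proof (lower_error_terms T HT1) as Herr. fold p in Herr.
  specialize (Hev T ltac:(lra)).
  split; [auto|]. unfold Rgt. rewrite prob_realizable_eq. eapply Rlt_le_trans; [|apply prob_realizable_ge; auto].
  rewrite !pow_INR, <- Hn. fold x.
  assert (Hexp0 : exp (- (lam + K1 / T)) <= (1 - x) ^ length (claws n))
    by (apply Rle_trans with (exp (- (INR (length (claws n)) * (x + 2 * x ^ 2)))); [|exact Hpow];
        apply exp_le; unfold K1, lam; lra).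
  assert (0 < 1 - K2 / T) by (pose proof (exp_pos (- (lam + K1 / T))); nra).
  eapply Rlt_le_trans; [apply Hev|].
  apply Rmult_le_compat; [left; apply exp_pos | lra | exact Hexp0 | unfold x, K2; lra].
Qed.

End LowerBound.

Section UpperBound.
Variable b : R.
Hypotheses (Hb : 0 < b) (Hlam : ln 2 < b ^ 3 / 6).

Lemma overlap_excess_le T : 2 <= T ->
  64 * (b / T ^ 4) + ((4 + b / T ^ 4 * (T ^ 3 - 4)) ^ 3 - 64) <= (112 * b + 12 * b ^ 2 + b ^ 3) / T.
Proof.
  intros HT. set (q := b / T ^ 4). set (beta := b / T). set (r := q * (T ^ 3 - 4)).
  assert (HT1 : 1 <= T) by lra.
  assert (Hq : 0 <= q) by (apply div_nonneg; [lra | apply pow_lt; lra]).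
  assert (Hqb : q <= beta) by (apply div_le_div_pow; lra || lia).
  assert (Hbeta : 0 <= beta) by (apply div_nonneg; lra).
  assert (HT3 : 8 <= T ^ 3) by (replace 8 with (2 ^ 3) by ring; apply pow_incr; lra).
  assert (Hr : 0 <= r <= beta) by (unfold r; replace beta with (q * T ^ 3) by (unfold q, beta; field; lra); nra).
  assert (Hb2 : beta ^ 2 <= b ^ 2 / T)
    by (replace (beta ^ 2) with (b ^ 2 / T ^ 2) by (unfold beta; field; lra); apply div_le_div_pow; nra || lra || lia).
  assert (Hb3 : beta ^ 3 <= b ^ 3 / T)
    by (replace (beta ^ 3) with (b ^ 3 / T ^ 3) by (unfold beta; field; lra); apply div_le_div_pow; nra || lra || lia).
  assert (r ^ 2 <= beta ^ 2) by (apply pow_incr; lra). assert (r ^ 3 <= beta ^ 3) by (apply pow_incr; lra).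
  replace ((4 + r) ^ 3 - 64) with (48 * r + 12 * r ^ 2 + r ^ 3) by ring.
  unfold beta in *; unfold Rdiv in *. lra.
Qed.

Lemma expected_claws_bounds T N : 1 <= T -> (T ^ 3) ^ 4 - 6 * (T ^ 3) ^ 3 <= 6 * INR N <= (T ^ 3) ^ 4 ->
  b ^ 3 / 6 - 6 * (b ^ 3 / 6) / T <= INR N * (b / T ^ 4) ^ 3 <= b ^ 3 / 6.
Proof.
  intros HT [HN1 HN2].
  assert (Hq3 : (b / T ^ 4) ^ 3 = b ^ 3 / T ^ 12) by (field; lra).
  assert (Hb3 : 0 < b ^ 3) by (apply pow_lt; lra).
  assert (HT12 : 0 < T ^ 12) by (apply pow_lt; lra).
  assert (Hc : 0 <= b ^ 3 / T ^ 12) by (apply div_nonneg; lra).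
  rewrite Hq3. split.
  - assert (b ^ 3 / 6 - 6 * (b ^ 3 / 6) / T ^ 3 = ((T ^ 3) ^ 4 - 6 * (T ^ 3) ^ 3) / 6 * (b ^ 3 / T ^ 12))
      as Hlo by (field; lra).
    assert (6 * (b ^ 3 / 6) / T ^ 3 <= 6 * (b ^ 3 / 6) / T) by (apply div_le_div_pow; nra || lra || lia).
    assert (((T ^ 3) ^ 4 - 6 * (T ^ 3) ^ 3) / 6 * (b ^ 3 / T ^ 12) <= INR N * (b ^ 3 / T ^ 12))
      by (apply Rmult_le_compat_r; lra).
    lra.
  - replace (b ^ 3 / 6) with ((T ^ 3) ^ 4 / 6 * (b ^ 3 / T ^ 12)) by (field; lra).
    apply Rmult_le_compat_r; lra.
Qed.

Lemma upper_exponent n T N : 2 <= T -> T ^ 3 = INR n ->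
  (T ^ 3) ^ 4 - 6 * (T ^ 3) ^ 3 <= 6 * INR N <= (T ^ 3) ^ 4 ->
  INR N * (claw_overlap_sum n (b / T ^ 4) - (b / T ^ 4) ^ 3)
  <= - (b ^ 3 / 6) + (6 * (b ^ 3 / 6) + 4 * (b ^ 3 / 6) * (112 * b + 12 * b ^ 2 + b ^ 3)) / T.
Proof.
  intros HT Hn HN. unfold claw_overlap_sum. rewrite <- Hn.
  pose proof (overlap_excess_le T HT) as Hexcess.
  pose proof (expected_claws_bounds T N ltac:(lra) HN) as [Hmu_lo Hmu_hi].
  set (q := b / T ^ 4) in *. set (mu := INR N * q ^ 3) in *.
  assert (Hmu0 : 0 <= mu) by (unfold mu; apply Rmult_le_pos; [apply pos_INR | apply pow_le; unfold q;
    apply div_nonneg; [lra | apply pow_lt; lra]]).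
  assert (Hq : 0 <= q) by (apply div_nonneg; [lra | apply pow_lt; lra]).
  assert (HT3 : 8 <= T ^ 3) by (replace 8 with (2 ^ 3) by ring; apply pow_incr; lra).
  assert (64 <= (4 + q * (T ^ 3 - 4)) ^ 3) by (replace 64 with (4 ^ 3) by ring; apply pow_incr; nra).
  replace (INR N * (4 * ((q ^ 4 - q ^ 3) * 4 ^ 3 + q ^ 3 * (4 + q * (T ^ 3 - 4)) ^ 3) - q ^ 3))
    with (- mu + 4 * mu * (64 * q + ((4 + q * (T ^ 3 - 4)) ^ 3 - 64))) by (unfold mu; ring).
  assert (4 * mu * (64 * q + ((4 + q * (T ^ 3 - 4)) ^ 3 - 64))
          <= 4 * (b ^ 3 / 6) * ((112 * b + 12 * b ^ 2 + b ^ 3) / T))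
    by (apply Rmult_le_compat; lra).
  replace ((6 * (b ^ 3 / 6) + 4 * (b ^ 3 / 6) * (112 * b + 12 * b ^ 2 + b ^ 3)) / T)
    with (6 * (b ^ 3 / 6) / T + 4 * (b ^ 3 / 6) * ((112 * b + 12 * b ^ 2 + b ^ 3) / T)) by (field; lra).
  lra.
Qed.

Lemma pstar_set_upper_threshold :
  exists T0, 1 <= T0 /\ forall n T p, T0 <= T -> T ^ 3 = INR n -> pstar_set n p -> p <= b / T ^ 4.
Proof.
  set (C := 6 * (b ^ 3 / 6) + 4 * (b ^ 3 / 6) * (112 * b + 12 * b ^ 2 + b ^ 3)).
  assert (HC : 0 <= C) by (unfold C; assert (0 < b ^ 3) by (apply pow_lt; lra); nra).
  destruct (eventually_le_minus_ln2 (b ^ 3 / 6) C Hlam HC) as (T0 & HT0 & Hev).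
  exists (T0 + 4). split; [lra|]. intros n T p HT Hn [Hp Hhalf].
  destruct (Rle_or_lt p (b / T ^ 4)) as [|Hlt]; [auto | exfalso].
  assert (Hn4 := at_least_4_of_cube n T ltac:(lra) Hn).
  set (q := b / T ^ 4) in Hlt.
  assert (Hq : 0 <= q) by (apply div_nonneg; [lra | apply pow_lt; lra]).
  enough (prob_realizable n p <= 1 / 2) by lra.
  rewrite prob_realizable_eq.
  eapply Rle_trans; [apply prob_down_closed_antimono with (p := q); try lra|].
  { intros S T' HST (f & Hf1 & Hf2). exists f. split; auto. }
  eapply Rle_trans; [apply prob_realizable_le_janson; lra|].
  eapply Rle_trans; [apply exp_le, janson_exponent_claws_le; [lra | apply claws_nodup | apply incl_refl]|].
  destruct (claws_count n Hn4) as [HN1 HN2]. rewrite <- Hn in HN1, HN2.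
  pose proof (upper_exponent n T (length (claws n)) ltac:(lra) Hn (conj HN1 HN2)) as Hup.
  specialize (Hev T ltac:(lra)). fold C q in Hup.
  replace (1 / 2) with (exp (- ln 2)) by (rewrite exp_Ropp, exp_ln; lra).
  apply exp_le. lra.
Qed.

End UpperBound.

Lemma realizable_nil n : realizable_R1 n [].
Proof. exists INR. split; [intros i j _ _ H; apply INR_eq; auto | intros e []]. Qed.

Lemma pstar_set_0 n : pstar_set n 0.
Proof.
  split; [lra|]. rewrite prob_realizable_eq, prob_zero.
  destruct (excluded_middle_informative (realizable_R1 n [])) as [|H]; [lra | contradiction (H (realizable_nil n))].
Qed.

Lemma Rpower_third_cube x : 0 < x -> Rpower x (1 / 3) ^ 3 = x.
Proof.
  intros Hx. rewrite <- Rpower_pow by (unfold Rpower; apply exp_pos).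
  rewrite Rpower_mult. replace (1 / 3 * INR 3) with 1 by (simpl; field). apply Rpower_1; auto.
Qed.

Lemma Rpower_four_thirds x : 0 < x -> Rpower x (4 / 3) = Rpower x (1 / 3) ^ 4.
Proof.
  intros Hx. rewrite <- Rpower_pow by (unfold Rpower; apply exp_pos).
  rewrite Rpower_mult. f_equal. simpl; field.
Qed.

Lemma cube_lt x y : 0 <= x -> x < y -> x ^ 3 < y ^ 3.
Proof.
  intros Hx Hxy. assert (0 < y ^ 2) by nra. assert (0 <= x * y) by nra. assert (0 <= x ^ 2) by nra.
  assert (0 < (y - x) * (x ^ 2 + x * y + y ^ 2)) by (apply Rmult_lt_0_compat; lra). nra.
Qed.

Lemma eventually_cube_root (P : nat -> R -> Prop) T0 : 1 <= T0 ->
  (forall n T, T0 <= T -> T ^ 3 = INR n -> P n T) ->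
  exists n0, forall n, (n >= n0)%nat -> P n (Rpower (INR n) (1 / 3)).
Proof.
  intros HT0 H. destruct (INR_unbounded (T0 ^ 3)) as [n0 Hn0]. exists n0. intros n Hn.
  apply le_INR in Hn. assert (Hpos : 0 < INR n) by (pose proof (pow_le T0 3 ltac:(lra)); lra).
  apply H; [|apply Rpower_third_cube; auto].
  destruct (Rle_or_lt T0 (Rpower (INR n) (1 / 3))) as [|Hlt]; auto.
  pose proof (pow_incr (Rpower (INR n) (1 / 3)) T0 3 ltac:(split; [unfold Rpower; left; apply exp_pos | lra])).
  rewrite Rpower_third_cube in * by auto. lra.
Qed.

Definition pstar_const := Rpower (6 * ln 2) (1 / 3).

Lemma pstar_const_cube : pstar_const ^ 3 = 6 * ln 2.
Proof. apply Rpower_third_cube. pose proof ln2_pos. lra. Qed.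

Lemma pstar_set_eventually_above a : a < pstar_const ->
  exists n0, forall n, (n >= n0)%nat -> exists p, pstar_set n p /\ a / Rpower (INR n) (4 / 3) <= p.
Proof.
  intros Ha. destruct (Rle_or_lt a 0) as [Ha0|Ha0].
  - exists 1%nat. intros n Hn. exists 0. split; [apply pstar_set_0|].
    assert (Hpos : 0 < Rpower (INR n) (4 / 3)) by (unfold Rpower; apply exp_pos).
    unfold Rdiv. pose proof (Rinv_0_lt_compat _ Hpos). nra.
  - assert (Hlam : a ^ 3 / 6 < ln 2) by (pose proof (cube_lt a pstar_const ltac:(lra) Ha); rewrite pstar_const_cube in *; lra).
    destruct (pstar_set_lower_threshold a Ha0 Hlam) as (T0 & HT0 & Hlow).
    destruct (eventually_cube_root (fun n T => pstar_set n (a / T ^ 4)) T0 HT0 Hlow) as [n0 Hn0].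
    exists (S n0). intros n Hn. exists (a / Rpower (INR n) (1 / 3) ^ 4). split; [apply Hn0; lia|].
    rewrite Rpower_four_thirds; [lra | apply lt_0_INR; lia].
Qed.

Lemma pstar_set_eventually_below b : pstar_const < b ->
  exists n0, forall n, (n >= n0)%nat -> forall p, pstar_set n p -> p <= b / Rpower (INR n) (4 / 3).
Proof.
  intros Hb. assert (Hc : 0 < pstar_const) by (unfold pstar_const, Rpower; apply exp_pos).
  assert (Hlam : ln 2 < b ^ 3 / 6) by (pose proof (cube_lt pstar_const b ltac:(lra) Hb); rewrite pstar_const_cube in *; lra).
  destruct (pstar_set_upper_threshold b ltac:(lra) Hlam) as (T0 & HT0 & Hup).
  destruct (eventually_cube_root (fun n T => forall p, pstar_set n p -> p <= b / T ^ 4) T0 HT0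
              (fun n T HT Hn p => Hup n T p HT Hn)) as [n0 Hn0].
  exists (S n0). intros n Hn p Hp. rewrite Rpower_four_thirds by (apply lt_0_INR; lia). apply Hn0; auto; lia.
Qed.

Theorem mainTheorem6 :
  forall eps : R, eps > 0 ->
  exists n0 : nat, forall n : nat, (n >= n0)%nat ->
    exists s : R, is_lub (pstar_set n) s /\
      (Rpower (6 * ln 2) (1 / 3) - eps) / Rpower (INR n) (4 / 3) <= s /\
      s <= (Rpower (6 * ln 2) (1 / 3) + eps) / Rpower (INR n) (4 / 3).
Proof.
  intros eps Heps. fold pstar_const.
  destruct (pstar_set_eventually_above (pstar_const - eps)) as [n1 Hlow]; [lra|].
  destruct (pstar_set_eventually_below (pstar_const + eps)) as [n2 Hup]; [lra|].
  exists (max n1 n2). intros n Hn.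
  destruct (completeness (pstar_set n)) as [s Hs].
  - exists 1. intros p [Hp _]. lra.
  - exists 0. apply pstar_set_0.
  - exists s. split; [auto | split].
    + destruct (Hlow n ltac:(lia)) as (p & Hp & Hle). apply Rle_trans with p; auto. apply Hs, Hp.
    + apply Hs. intros p Hp. apply Hup; auto. lia.
Qed.
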